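(* Let a locally compact group $G$ act continuously on a locally compact Hausdorff space $X$, and let $\alpha$ be the associated action on $C_0(X)$, $\alpha_s(f)(x)=f(s^{-1}\cdot x)$. Then $\alpha$ is slice proper if and only if for every $x\in X$ and every compact $K\subset X$ the set $\{s\in G:s\cdot x\in K\}$ is compact in $G$ (i.e., for each $x$ the orbit map $s\mapsto s\cdot x$ is proper).
   Context: For an action $\alpha$ of $G$ on a $C^*$-algebra $B$, let $\widetilde\alpha:B\to M(B\otimes C_0(G))$ be the homomorphism with $\widetilde\alpha(b)(s)=\alpha_{s}(b)$ viewed as a bounded strictly continuous $B$-valued function (for $B=C_0(X)$: $\widetilde\alpha(f)(x,s)=f(s\cdot x)$). The action is slice proper if $(\omega\otimes\mathrm{id})(\widetilde\alpha(b))\in C_0(G)$ for all $\omega\in B^*$ and $b\in B$; here $(\omega\otimes\mathrm{id})(\widetilde\alpha(b))$ is the function $s\mapsto\omega(\widetilde\alpha(b)(s))$, a priori in $C_b(G)$. *)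

From Stdlib Require Import Reals List.
Open Scope R_scope.

Definition C : Type := (R * R)%type.
Definition C0c : C := (0, 0).
Definition Cadd (z w : C) : C := (fst z + fst w, snd z + snd w).
Definition Copp (z : C) : C := (- fst z, - snd z).
Definition Cmul (z w : C) : C :=
  (fst z * fst w - snd z * snd w, fst z * snd w + snd z * fst w).
Definition Cnorm (z : C) : R := sqrt (fst z * fst z + snd z * snd z).

Record TopSpace := {
  pt :> Type;
  open : (pt -> Prop) -> Prop;
  open_full : open (fun _ => True);
  open_inter : forall U V, open U -> open V -> open (fun x => U x /\ V x);
  open_union : forall F : (pt -> Prop) -> Prop,
      (forall U, F U -> open U) -> open (fun x => exists U, F U /\ U x)
}.
Arguments open {t} _.

Definition tcompact {X : TopSpace} (K : X -> Prop) : Prop :=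
  forall (I : Type) (U : I -> X -> Prop),
    (forall i, open (U i)) ->
    (forall x, K x -> exists i, U i x) ->
    exists l : list I, forall x, K x -> exists i, In i l /\ U i x.

Definition hausdorff (X : TopSpace) : Prop :=
  forall x y : X, x <> y ->
    exists U V, open U /\ open V /\ U x /\ V y /\ forall z, ~ (U z /\ V z).

Definition locally_compact (X : TopSpace) : Prop :=
  forall x : X, exists (U K : X -> Prop),
    open U /\ U x /\ (forall y, U y -> K y) /\ tcompact K.

Definition tcontinuous {X Y : TopSpace} (f : X -> Y) : Prop :=
  forall V, open V -> open (fun x => V (f x)).

Definition prod_open {X Y : TopSpace} (W : X -> Y -> Prop) : Prop :=
  forall x y, W x y ->
    exists U V, open U /\ open V /\ U x /\ V y /\
      forall x' y', U x' -> V y' -> W x' y'.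

Definition continuous2 {X Y Z : TopSpace} (f : X -> Y -> Z) : Prop :=
  forall W, open W -> prod_open (fun x y => W (f x y)).

Record TopGroup := {
  gsp :> TopSpace;
  gmul : gsp -> gsp -> gsp;
  ginv : gsp -> gsp;
  gone : gsp;
  gmulA : forall a b c, gmul a (gmul b c) = gmul (gmul a b) c;
  gmul1l : forall a, gmul gone a = a;
  gmulVl : forall a, gmul (ginv a) a = gone;
  gmul_cont : continuous2 gmul;
  ginv_cont : tcontinuous ginv
}.

Definition continuous_action (G : TopGroup) (X : TopSpace)
  (act : G -> X -> X) : Prop :=
  (forall x, act (gone G) x = x) /\
  (forall s t x, act (gmul G s t) x = act s (act t x)) /\
  continuous2 act.

Definition ccontinuous {X : TopSpace} (f : X -> C) : Prop :=
  forall (x : X) (eps : R), 0 < eps ->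
    exists U, open U /\ U x /\
      forall y, U y -> Cnorm (Cadd (f y) (Copp (f x))) < eps.

Definition vanishes_at_infinity {X : TopSpace} (f : X -> C) : Prop :=
  forall eps : R, 0 < eps ->
    exists K : X -> Prop, tcompact K /\ forall x, ~ K x -> Cnorm (f x) < eps.

Definition in_C0 {X : TopSpace} (f : X -> C) : Prop :=
  ccontinuous f /\ vanishes_at_infinity f.

(* omega is (the values on C_0(X) of) an element of the Banach dual C_0(X)^*:
   a complex-linear functional on C_0(X) bounded for the sup norm. *)
Definition in_C0_dual {X : TopSpace} (omega : (X -> C) -> C) : Prop :=
  (forall (a : C) (f g : X -> C), in_C0 f -> in_C0 g ->
     omega (fun x => Cadd (Cmul a (f x)) (g x)) =
     Cadd (Cmul a (omega f)) (omega g)) /\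
  (exists M : R, forall (f : X -> C) (c : R), in_C0 f ->
     (forall x, Cnorm (f x) <= c) -> Cnorm (omega f) <= M * c).

Definition alpha (G : TopGroup) (X : TopSpace) (act : G -> X -> X)
  (s : G) (f : X -> C) : X -> C :=
  fun x => f (act (ginv G s) x).

Definition slice_proper (G : TopGroup) (X : TopSpace)
  (act : G -> X -> X) : Prop :=
  forall (omega : (X -> C) -> C) (f : X -> C),
    in_C0_dual omega -> in_C0 f ->
    in_C0 (fun s : G => omega (alpha G X act s f)).

(* (=>) Test slice properness on the point evaluation at x and on a Urysohn
   function f equal to 1 on K: {s | s^-1 . x in K} is closed inside the compact
   set outside which |f (s^-1 . x)| < 1/2, and inversion maps it onto
   {s | s . x in K}.
   (<=) s |-> omega (alpha_s f) is continuous by uniform continuity of f along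
   the action.  If it did not vanish at infinity, a sequence s_n escaping every
   compact set would make alpha_{s_n} f bounded, pointwise null and of omega-
   value >= eps.  Lacking the Riesz theorem, dominated convergence is replaced
   by the variation functional |omega| (h) = sup { Re omega g : |g| <= h },
   additive on continuous h, and a Dini argument (the weak-null lemma). *)

From Stdlib Require Import Reals List Lra Lia Arith ZArith.
From Stdlib Require Import FunctionalExtensionality PropExtensionality.
From Stdlib Require Import Classical ClassicalEpsilon.
Open Scope R_scope.

Section Topology.
Context {X : TopSpace}.

Lemma pred_ext (A B : X -> Prop) : (forall x, A x <-> B x) -> A = B.
Proof.
  intros H; apply functional_extensionality; intros x.
  apply propositional_extensionality; auto.
Qed.

Lemma open_ext (A B : X -> Prop) : (forall x, A x <-> B x) -> open A -> open B.
Proof. intros H HA; rewrite <- (pred_ext A B H); exact HA. Qed.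

Lemma compact_ext (A B : X -> Prop) :
  (forall x, A x <-> B x) -> tcompact A -> tcompact B.
Proof. intros H HA; rewrite <- (pred_ext A B H); exact HA. Qed.

Lemma open_local (A : X -> Prop) :
  (forall x, A x -> exists U, open U /\ U x /\ forall y, U y -> A y) -> open A.
Proof.
  intros H.
  apply (open_ext (fun x => exists U, (open U /\ forall y, U y -> A y) /\ U x)).
  - intros x; split.
    + intros [U [[_ HU] Ux]]; auto.
    + intros Ax; destruct (H x Ax) as [U [oU [Ux HU]]]; exists U; auto.
  - apply open_union; intros U [h _]; exact h.
Qed.

Lemma open_empty : open (fun _ : X => False).
Proof. apply open_local; intros x []. Qed.

Lemma open_finter {I : Type} (U : I -> X -> Prop) (l : list I) :
  (forall i, open (U i)) -> open (fun z => forall i, In i l -> U i z).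
Proof.
  intros HU; induction l as [|a l IH].
  - apply (open_ext (fun _ => True)); [|apply open_full].
    intros x; split; [intros _ i []| auto].
  - apply (open_ext (fun z => U a z /\ forall i, In i l -> U i z)).
    + intros z; split.
      * intros [h1 h2] i [<-|Hi]; auto.
      * intros h; split; [apply h; left; auto| intros i Hi; apply h; right; auto].
    + apply open_inter; auto.
Qed.

Lemma open_funion {I : Type} (U : I -> X -> Prop) (l : list I) :
  (forall i, open (U i)) -> open (fun z => exists i, In i l /\ U i z).
Proof.
  intros HU; apply open_local; intros x [i [Hi Ux]].
  exists (U i); repeat split; auto. intros y Uy; eauto.
Qed.

Lemma open_or (A B : X -> Prop) : open A -> open B -> open (fun x => A x \/ B x).
Proof.
  intros oA oB; apply open_local; intros x [Ax|Bx];
    [exists A| exists B]; repeat split; auto.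
Qed.

Lemma compact_empty : tcompact (fun _ : X => False).
Proof. intros I U _ _; exists nil; intros x []. Qed.

Lemma compact_union (A B : X -> Prop) :
  tcompact A -> tcompact B -> tcompact (fun x => A x \/ B x).
Proof.
  intros HA HB I U oU cov.
  destruct (HA I U oU) as [l1 H1]; [intros x Ax; apply cov; auto|].
  destruct (HB I U oU) as [l2 H2]; [intros x Bx; apply cov; auto|].
  exists (l1 ++ l2); intros x [Ax|Bx].
  - destruct (H1 x Ax) as [i [Hi Ui]]; exists i; split; auto; apply in_or_app; auto.
  - destruct (H2 x Bx) as [i [Hi Ui]]; exists i; split; auto; apply in_or_app; auto.
Qed.

Lemma compact_funion {I : Type} (K : I -> X -> Prop) (l : list I) :
  (forall i, In i l -> tcompact (K i)) ->
  tcompact (fun z => exists i, In i l /\ K i z).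
Proof.
  induction l as [|a l IH]; intros H.
  - apply (compact_ext (fun _ => False)); [|apply compact_empty].
    intros x; split; [intros []|intros [i [[] _]]].
  - apply (compact_ext (fun z => K a z \/ exists i, In i l /\ K i z)).
    + intros z; split.
      * intros [h|[i [Hi h]]]; [exists a; split; [left|]; auto| exists i; split; [right|]; auto].
      * intros [i [[<-|Hi] h]]; [left; auto| right; eauto].
    + apply compact_union; [apply H; left; auto| apply IH; intros i Hi; apply H; right; auto].
Qed.

Lemma compact_closed_sub (K F : X -> Prop) :
  tcompact K -> open (fun x => ~ F x) -> (forall x, F x -> K x) -> tcompact F.
Proof.
  intros HK oF sub I U oU cov.
  destruct (HK (option I) (fun o => match o with Some i => U i | None => fun x => ~ F x end))
    as [l Hl].
  - intros [i|]; auto.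
  - intros x Kx. destruct (classic (F x)) as [Fx|nFx].
    + destruct (cov x Fx) as [i Ui]; exists (Some i); auto.
    + exists None; auto.
  - exists (flat_map (fun o => match o with Some i => i :: nil | None => nil end) l).
    intros x Fx. destruct (Hl x (sub x Fx)) as [[i|] [Hi Ui]].
    + exists i; split; auto. apply in_flat_map. exists (Some i); split; auto. left; auto.
    + contradiction.
Qed.

End Topology.

Section Continuity.
Context {X Y Z : TopSpace}.

Lemma compact_image (f : X -> Y) (K : X -> Prop) (D : Y -> Prop) :
  tcontinuous f -> tcompact K -> (forall x, K x -> D (f x)) ->
  (forall y, D y -> exists x, K x /\ f x = y) -> tcompact D.
Proof.
  intros cf HK KD HD I U oU cov.
  destruct (HK I (fun i x => U i (f x))) as [l Hl].
  - intros i; apply cf; auto.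
  - intros x Kx. apply cov; auto.
  - exists l; intros y Dy. destruct (HD y Dy) as [x [Kx <-]]. auto.
Qed.

Lemma cont_const (c : Y) : tcontinuous (fun _ : X => c).
Proof.
  intros V oV. destruct (classic (V c)) as [h|h].
  - apply (open_ext (fun _ => True)); [intros; tauto| apply open_full].
  - apply (open_ext (fun _ => False)); [intros; tauto| apply open_empty].
Qed.

Lemma cont_id : tcontinuous (fun x : X => x).
Proof. intros V oV; exact oV. Qed.

Lemma cont2_comp {W : TopSpace} (h : X -> Y -> Z) (u : W -> X) (v : W -> Y) :
  continuous2 h -> tcontinuous u -> tcontinuous v ->
  tcontinuous (fun w => h (u w) (v w)).
Proof.
  intros ch cu cv V oV. apply open_local. intros w Hw.
  destruct (ch V oV (u w) (v w) Hw) as [A [B [oA [oB [Aw [Bw HAB]]]]]].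
  exists (fun w' => A (u w') /\ B (v w')). repeat split; auto.
  - apply open_inter; [apply cu|apply cv]; auto.
  - intros y [h1 h2]; auto.
Qed.

End Continuity.

Section Hausdorff.
Context {X : TopSpace} (HX : hausdorff X).

Lemma sep_point_compact (D : X -> Prop) (x : X) : tcompact D -> ~ D x ->
  exists A B, open A /\ open B /\ A x /\ (forall y, D y -> B y) /\
    forall z, ~ (A z /\ B z).
Proof.
  intros HD nDx.
  assert (Hsep : forall k : {k | D k}, exists AB : (X -> Prop) * (X -> Prop),
     open (fst AB) /\ open (snd AB) /\ fst AB x /\ snd AB (proj1_sig k) /\
     forall z, ~ (fst AB z /\ snd AB z)).
  { intros [k Dk]. simpl. assert (x <> k) by (intros ->; contradiction).
    destruct (HX x k H) as [A [B h]]. exists (A, B); simpl; tauto. }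
  destruct (choice _ Hsep) as [g Hg].
  destruct (HD {k | D k} (fun k => snd (g k))) as [l Hl].
  - intros k; apply Hg.
  - intros y Dy. exists (exist _ y Dy). apply Hg.
  - exists (fun z => forall k, In k l -> fst (g k) z).
    exists (fun z => exists k, In k l /\ snd (g k) z).
    repeat split.
    + apply open_finter; intros k; apply Hg.
    + apply open_funion; intros k; apply Hg.
    + intros k _; apply Hg.
    + intros y Dy; apply Hl; auto.
    + intros z [h1 [k [Hk h2]]]. apply (proj2 (proj2 (proj2 (proj2 (Hg k)))) z); auto.
Qed.

Lemma compact_closed (D : X -> Prop) : tcompact D -> open (fun x => ~ D x).
Proof.
  intros HD. apply open_local. intros x nDx.
  destruct (sep_point_compact D x HD nDx) as [A [B [oA [oB [Ax [DB dis]]]]]].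
  exists A; repeat split; auto. intros y Ay Dy. apply (dis y); auto.
Qed.

Lemma compact_minus_open (K U : X -> Prop) :
  tcompact K -> open U -> tcompact (fun y => K y /\ ~ U y).
Proof.
  intros cK oU. apply (compact_closed_sub K); [auto| |intros y [h _]; auto].
  apply (open_ext (fun y => ~ K y \/ U y)).
  - intros y; split; [tauto|].
    intros h; destruct (classic (K y)); [right; apply NNPP; tauto| left; auto].
  - apply open_or; [apply compact_closed; auto| auto].
Qed.

End Hausdorff.

Section Group.
Context {G : TopGroup}.
Local Notation "a * b" := (gmul G a b).
Local Notation e := (gone G).
Local Notation inv := (ginv G).

Lemma gmulVr a : a * inv a = e.
Proof.
  rewrite <- (gmul1l G (a * inv a)).
  rewrite <- (gmulVl G (inv a)) at 1.
  rewrite <- gmulA. rewrite (gmulA G (inv a) a (inv a)). rewrite gmulVl, gmul1l.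
  apply gmulVl.
Qed.

Lemma gmul1r a : a * e = a.
Proof. rewrite <- (gmulVl G a), gmulA, gmulVr, gmul1l; auto. Qed.

Lemma ginvK a : inv (inv a) = a.
Proof.
  rewrite <- (gmul1r (inv (inv a))), <- (gmulVl G a), gmulA, gmulVl, gmul1l; auto.
Qed.

Lemma ginv1 : inv e = e.
Proof. rewrite <- (gmul1r (inv e)); apply gmulVl. Qed.

Lemma ginv_mul a b : inv (a * b) = inv b * inv a.
Proof.
  assert (H : (inv b * inv a) * (a * b) = e).
  { rewrite gmulA, <- (gmulA G (inv b) (inv a) a), gmulVl, gmul1r, gmulVl; auto. }
  rewrite <- (gmul1r (inv (a*b))), <- (gmulVr (a*b)) at 1.
  rewrite gmulA. rewrite <- (gmul1l G (inv (a*b) * (a*b))) , gmulVl, gmul1r.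
  rewrite <- H, <- gmulA, gmulVr, gmul1r; auto.
Qed.

Lemma cont_lmul (a : G) : tcontinuous (fun s : G => a * s).
Proof.
  apply (cont2_comp (gmul G) (fun _ => a) (fun s => s));
    [apply gmul_cont|apply cont_const|apply cont_id].
Qed.

Lemma compact_inv (K : G -> Prop) :
  tcompact K -> tcompact (fun s => K (inv s)).
Proof.
  intros cK. apply (compact_image inv K); auto.
  - apply ginv_cont.
  - intros t ht; rewrite ginvK; auto.
  - intros y hy; exists (inv y); split; auto; apply ginvK.
Qed.

End Group.
Section RealContinuity.
Context {X : TopSpace}.

Definition rcont_at (phi : X -> R) (x : X) := forall eps, 0 < eps ->
  exists U, open U /\ U x /\ forall y, U y -> Rabs (phi y - phi x) < eps.
Definition rcont (phi : X -> R) := forall x, rcont_at phi x.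

Lemma rc_comp2 (h : R -> R -> R) (u v : X -> R) x : rcont_at u x -> rcont_at v x ->
  (forall eps, 0 < eps -> exists d, 0 < d /\ forall a b, Rabs (a - u x) < d -> Rabs (b - v x) < d ->
      Rabs (h a b - h (u x) (v x)) < eps) ->
  rcont_at (fun y => h (u y) (v y)) x.
Proof.
  intros cu cv ch eps Heps. destruct (ch eps Heps) as [d [Hd Hh]].
  destruct (cu d Hd) as [U [oU [Ux HU]]]. destruct (cv d Hd) as [V [oV [Vx HV]]].
  exists (fun y => U y /\ V y); repeat split; auto.
  - apply open_inter; auto.
  - intros y [h1 h2]; apply Hh; auto.
Qed.

Lemma rc_const c x : rcont_at (fun _ => c) x.
Proof. intros eps He; exists (fun _ => True); repeat split; [apply open_full| intros; rewrite Rminus_diag, Rabs_R0; auto]. Qed.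

Lemma rc_ext (phi psi : X -> R) x : (forall y, phi y = psi y) -> rcont_at psi x -> rcont_at phi x.
Proof. intros H h eps He; destruct (h eps He) as [U [oU [Ux HU]]]; exists U; repeat split; auto; intros y Uy; rewrite !H; auto. Qed.

Lemma rc_plus u v x : rcont_at u x -> rcont_at v x -> rcont_at (fun y => u y + v y) x.
Proof.
  intros cu cv. apply (rc_comp2 Rplus); auto. intros eps He; exists (eps/2); split; [lra|].
  intros a b Ha Hb. replace (a + b - (u x + v x)) with ((a - u x) + (b - v x)) by ring.
  eapply Rle_lt_trans; [apply Rabs_triang|lra].
Qed.

Lemma rc_opp u x : rcont_at u x -> rcont_at (fun y => - u y) x.
Proof.
  intros cu eps He; destruct (cu eps He) as [U [oU [Ux HU]]]; exists U; repeat split; auto.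
  intros y Uy. replace (- u y - - u x) with (- (u y - u x)) by ring; rewrite Rabs_Ropp; auto.
Qed.

Lemma rc_minus u v x : rcont_at u x -> rcont_at v x -> rcont_at (fun y => u y - v y) x.
Proof. intros; apply rc_plus; auto; apply rc_opp; auto. Qed.

Lemma rc_mult u v x : rcont_at u x -> rcont_at v x -> rcont_at (fun y => u y * v y) x.
Proof.
  intros cu cv. apply (rc_comp2 Rmult); auto. intros eps He.
  set (A := Rabs (u x)). set (B := Rabs (v x)).
  assert (HA : 0 <= A) by apply Rabs_pos. assert (HB : 0 <= B) by apply Rabs_pos.
  exists (Rmin 1 ((eps/2) / (A + B + 1))). split.
  { apply Rmin_pos; [lra| apply Rdiv_lt_0_compat; lra]. }
  intros a b Ha Hb.
  set (d := Rmin 1 ((eps/2) / (A + B + 1))) in *.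
  assert (d1 : d <= 1) by apply Rmin_l.
  assert (d2 : d <= (eps/2) / (A + B + 1)) by apply Rmin_r.
  assert (d3 : d * (A + B + 1) <= eps/2).
  { apply (Rmult_le_compat_r (A+B+1)) in d2; [|lra].
    unfold Rdiv in d2; rewrite Rmult_assoc, Rinv_l in d2; lra. }
  replace (a * b - u x * v x) with ((a - u x) * b + u x * (b - v x)) by ring.
  eapply Rle_lt_trans; [apply Rabs_triang|]. rewrite !Rabs_mult.
  assert (Hb' : Rabs b <= B + 1).
  { replace b with ((b - v x) + v x) by ring. eapply Rle_trans; [apply Rabs_triang|]. fold B; lra. }
  assert (0 <= Rabs (a - u x)) by apply Rabs_pos.
  assert (0 <= Rabs (b - v x)) by apply Rabs_pos.
  apply Rle_lt_trans with (d * (B + 1) + A * d).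
  - apply Rplus_le_compat.
    + apply Rmult_le_compat; auto; try apply Rabs_pos; lra.
    + apply Rmult_le_compat_l; auto; lra.
  - assert (0 < d) by (apply Rmin_pos; [lra| apply Rdiv_lt_0_compat; lra]).
    nra.
Qed.

Lemma rc_inv u x : rcont_at u x -> 0 < u x -> rcont_at (fun y => / u y) x.
Proof.
  intros cu pos. apply (rc_comp2 (fun a _ => / a) u u); auto. intros eps He.
  set (p := u x) in *.
  exists (Rmin (p/2) (eps * p * p / 2)). split.
  { apply Rmin_pos; [lra|]. apply Rdiv_lt_0_compat; [|lra]. apply Rmult_lt_0_compat; [|lra]. nra. }
  intros a _ Ha _.
  assert (h1 : Rabs (a - p) < p/2) by (eapply Rlt_le_trans; [apply Ha| apply Rmin_l]).
  assert (h2 : Rabs (a - p) < eps * p * p / 2) by (eapply Rlt_le_trans; [apply Ha| apply Rmin_r]).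
  apply Rabs_def2 in h1. destruct h1 as [h1 h1'].
  assert (apos : p / 2 < a) by lra.
  replace (/ a - / p) with ((p - a) / (a * p)) by (field; lra).
  unfold Rdiv; rewrite Rabs_mult, Rabs_inv, (Rabs_right (a * p)) by nra.
  rewrite <- Rabs_Ropp. replace (- (p - a)) with (a - p) by ring.
  apply Rmult_lt_reg_r with (a * p); [nra|].
  rewrite Rmult_assoc, Rinv_l by nra. rewrite Rmult_1_r.
  apply Rlt_le_trans with (eps * p * p / 2); auto.
  assert (a * p >= p * p / 2) by nra.
  assert (eps * (a * p) >= eps * (p * p / 2)) by (apply Rmult_ge_compat_l; lra). lra.
Qed.

Lemma rc_abs u x : rcont_at u x -> rcont_at (fun y => Rabs (u y)) x.
Proof.
  intros cu eps He; destruct (cu eps He) as [U [oU [Ux HU]]]; exists U; repeat split; auto.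
  intros y Uy. eapply Rle_lt_trans; [apply Rabs_triang_inv2|]; auto.
Qed.

Lemma rc_max u v x : rcont_at u x -> rcont_at v x -> rcont_at (fun y => Rmax (u y) (v y)) x.
Proof.
  intros cu cv. apply rc_ext with (fun y => (u y + v y + Rabs (u y - v y)) / 2).
  - intros y. unfold Rmax. destruct (Rle_dec (u y) (v y)).
    + rewrite Rabs_left1 by lra; field.
    + rewrite Rabs_right by lra; field.
  - unfold Rdiv. apply rc_mult; [|apply rc_const]. apply rc_plus; [apply rc_plus; auto|].
    apply rc_abs, rc_minus; auto.
Qed.

Lemma rc_min u v x : rcont_at u x -> rcont_at v x -> rcont_at (fun y => Rmin (u y) (v y)) x.
Proof.
  intros cu cv. apply rc_ext with (fun y => (u y + v y - Rabs (u y - v y)) / 2).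
  - intros y. unfold Rmin. destruct (Rle_dec (u y) (v y)).
    + rewrite Rabs_left1 by lra; field.
    + rewrite Rabs_right by lra; field.
  - unfold Rdiv. apply rc_mult; [|apply rc_const]. apply rc_minus; [apply rc_plus; auto|].
    apply rc_abs, rc_minus; auto.
Qed.

Lemma rc_local (phi psi : X -> R) (O : X -> Prop) x : open O -> O x ->
  (forall y, O y -> phi y = psi y) -> rcont_at psi x -> rcont_at phi x.
Proof.
  intros oO Ox H cp eps He. destruct (cp eps He) as [U [oU [Ux HU]]].
  exists (fun y => O y /\ U y); repeat split; auto.
  - apply open_inter; auto.
  - intros y [h1 h2]; rewrite !H; auto.
Qed.

Lemma open_lt (phi : X -> R) a : rcont phi -> open (fun x => phi x < a).
Proof.
  intros cp; apply open_local; intros x Hx.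
  destruct (cp x (a - phi x)) as [U [oU [Ux HU]]]; [lra|].
  exists U; repeat split; auto. intros y Uy; specialize (HU y Uy).
  apply Rabs_def2 in HU; lra.
Qed.

Lemma open_gt (phi : X -> R) a : rcont phi -> open (fun x => a < phi x).
Proof.
  intros cp; apply open_local; intros x Hx.
  destruct (cp x (phi x - a)) as [U [oU [Ux HU]]]; [lra|].
  exists U; repeat split; auto. intros y Uy; specialize (HU y Uy).
  apply Rabs_def2 in HU; lra.
Qed.
End RealContinuity.

Lemma Cnorm_ge0 z : 0 <= Cnorm z.
Proof. apply sqrt_pos. Qed.

Lemma Cnorm_sq z : Cnorm z * Cnorm z = fst z * fst z + snd z * snd z.
Proof. unfold Cnorm; apply sqrt_sqrt; nra. Qed.

Lemma sq_le (a b : R) : 0 <= b -> a * a <= b * b -> a <= b.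
Proof. intros. destruct (Rle_dec a b); auto. nra. Qed.

Lemma Cnorm_fst z : Rabs (fst z) <= Cnorm z.
Proof.
  apply sq_le; [apply Cnorm_ge0|]. rewrite Cnorm_sq, <- Rabs_mult, Rabs_right by nra. nra.
Qed.

Lemma Cnorm_snd z : Rabs (snd z) <= Cnorm z.
Proof.
  apply sq_le; [apply Cnorm_ge0|]. rewrite Cnorm_sq, <- Rabs_mult, Rabs_right by nra. nra.
Qed.

Lemma Cnorm_le_sum z : Cnorm z <= Rabs (fst z) + Rabs (snd z).
Proof.
  apply sq_le. { pose proof (Rabs_pos (fst z)); pose proof (Rabs_pos (snd z)); lra. }
  rewrite Cnorm_sq. pose proof (Rabs_pos (fst z)); pose proof (Rabs_pos (snd z)).
  assert (Rabs (fst z) * Rabs (fst z) = fst z * fst z) by (rewrite <- Rabs_mult, Rabs_right by nra; auto).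
  assert (Rabs (snd z) * Rabs (snd z) = snd z * snd z) by (rewrite <- Rabs_mult, Rabs_right by nra; auto).
  nra.
Qed.

Lemma Cnorm_real r : Cnorm (r, 0) = Rabs r.
Proof.
  apply Rle_antisym.
  - eapply Rle_trans; [apply Cnorm_le_sum|]. simpl. rewrite Rabs_R0; lra.
  - apply (Cnorm_fst (r, 0)).
Qed.

Lemma Cnorm_mul a z : Cnorm (Cmul a z) = Cnorm a * Cnorm z.
Proof.
  unfold Cnorm. rewrite <- sqrt_mult by nra. f_equal. simpl. ring.
Qed.

Lemma Cnorm_opp z : Cnorm (Copp z) = Cnorm z.
Proof. unfold Cnorm; simpl; f_equal; ring. Qed.

Lemma Cnorm_C0c : Cnorm C0c = 0.
Proof. unfold C0c; rewrite Cnorm_real, Rabs_R0; auto. Qed.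

Lemma Cnorm_scal q z : Cnorm (Cmul (q, 0) z) = Rabs q * Cnorm z.
Proof. rewrite Cnorm_mul, Cnorm_real; auto. Qed.

Lemma Cnorm_triang z w : Cnorm (Cadd z w) <= Cnorm z + Cnorm w.
Proof.
  apply sq_le. { pose proof (Cnorm_ge0 z); pose proof (Cnorm_ge0 w); lra. }
  rewrite Cnorm_sq. simpl.
  assert (CS : fst z * fst w + snd z * snd w <= Cnorm z * Cnorm w).
  { apply sq_le. { pose proof (Cnorm_ge0 z); pose proof (Cnorm_ge0 w); nra. }
    replace (Cnorm z * Cnorm w * (Cnorm z * Cnorm w)) with
      ((Cnorm z * Cnorm z) * (Cnorm w * Cnorm w)) by ring.
    rewrite !Cnorm_sq.
    pose proof (Rle_0_sqr (fst z * snd w - snd z * fst w)). unfold Rsqr in *. nra. }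
  pose proof (Cnorm_sq z); pose proof (Cnorm_sq w). nra.
Qed.

Lemma Cnorm_eq0 z : Cnorm z <= 0 -> z = C0c.
Proof.
  intros h. pose proof (Cnorm_ge0 z) as h0. pose proof (Cnorm_sq z) as hsq.
  assert (hz : Cnorm z = 0) by lra. rewrite hz in hsq.
  destruct z as [a b]; simpl in hsq. unfold C0c.
  assert (a = 0) by nra. assert (b = 0) by nra. subst; auto.
Qed.

Definition Cdist (z w : C) := Cnorm (Cadd z (Copp w)).

Lemma Cdist_sym z w : Cdist z w = Cdist w z.
Proof. unfold Cdist, Cnorm; simpl; f_equal; ring. Qed.

Lemma Cdist_triang z w u : Cdist z w <= Cdist z u + Cdist u w.
Proof.
  unfold Cdist. replace (Cadd z (Copp w)) with (Cadd (Cadd z (Copp u)) (Cadd u (Copp w))).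
  - apply Cnorm_triang.
  - unfold Cadd, Copp; simpl; f_equal; ring.
Qed.

Lemma Cdist_le z w : Cdist z w <= Cnorm z + Cnorm w.
Proof. unfold Cdist. rewrite <- (Cnorm_opp w). apply Cnorm_triang. Qed.

Lemma Cnorm_dist z w : Rabs (Cnorm z - Cnorm w) <= Cdist z w.
Proof.
  assert (h1 : Cnorm z <= Cdist z w + Cnorm w).
  { replace z with (Cadd (Cadd z (Copp w)) w) at 1 by (destruct z, w; unfold Cadd, Copp; simpl; f_equal; ring).
    apply Cnorm_triang. }
  assert (h2 : Cnorm w <= Cdist z w + Cnorm z).
  { rewrite Cdist_sym. replace w with (Cadd (Cadd w (Copp z)) z) at 1 by (destruct z, w; unfold Cadd, Copp; simpl; f_equal; ring).
    apply Cnorm_triang. }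
  apply Rabs_le; lra.
Qed.

Lemma Cdist_comp z w : Cdist z w <= Rabs (fst z - fst w) + Rabs (snd z - snd w).
Proof. unfold Cdist. eapply Rle_trans; [apply Cnorm_le_sum|]. simpl. unfold Rminus; lra. Qed.

Lemma Cdist_fst z w : Rabs (fst z - fst w) <= Cdist z w.
Proof. apply (Cnorm_fst (Cadd z (Copp w))). Qed.
Lemma Cdist_snd z w : Rabs (snd z - snd w) <= Cdist z w.
Proof. apply (Cnorm_snd (Cadd z (Copp w))). Qed.

Lemma Cpair_eq (z w : C) : fst z = fst w -> snd z = snd w -> z = w.
Proof. destruct z, w; simpl; intros; subst; auto. Qed.

Section ComplexContinuity.
Context {X : TopSpace}.

Definition ccont_at (f : X -> C) x := forall eps, 0 < eps ->
  exists U, open U /\ U x /\ forall y, U y -> Cnorm (Cadd (f y) (Copp (f x))) < eps.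

Lemma cc_fst f x : ccont_at f x -> rcont_at (fun y => fst (f y)) x.
Proof. intros h eps He; destruct (h eps He) as [U [oU [Ux HU]]]; exists U; repeat split; auto.
  intros y Uy; eapply Rle_lt_trans; [apply (Cdist_fst (f y) (f x))|apply HU; auto]. Qed.
Lemma cc_snd f x : ccont_at f x -> rcont_at (fun y => snd (f y)) x.
Proof. intros h eps He; destruct (h eps He) as [U [oU [Ux HU]]]; exists U; repeat split; auto.
  intros y Uy; eapply Rle_lt_trans; [apply (Cdist_snd (f y) (f x))|apply HU; auto]. Qed.
Lemma cc_norm f x : ccont_at f x -> rcont_at (fun y => Cnorm (f y)) x.
Proof. intros h eps He; destruct (h eps He) as [U [oU [Ux HU]]]; exists U; repeat split; auto.
  intros y Uy; eapply Rle_lt_trans; [apply (Cnorm_dist (f y) (f x))|apply HU; auto]. Qed.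

Lemma cc_of_rc f x : rcont_at (fun y => fst (f y)) x -> rcont_at (fun y => snd (f y)) x -> ccont_at f x.
Proof.
  intros h1 h2 eps He.
  destruct (h1 (eps/2)) as [U [oU [Ux HU]]]; [lra|].
  destruct (h2 (eps/2)) as [V [oV [Vx HV]]]; [lra|].
  exists (fun y => U y /\ V y); repeat split; auto; [apply open_inter; auto|].
  intros y [Uy Vy]. eapply Rle_lt_trans; [apply (Cdist_comp (f y) (f x))|].
  specialize (HU y Uy); specialize (HV y Vy); lra.
Qed.

End ComplexContinuity.

Lemma cc_map {X Y : TopSpace} (m : X -> Y) (f : Y -> C) z :
  tcontinuous m -> ccont_at f (m z) -> ccont_at (fun w => f (m w)) z.
Proof.
  intros cm cp eps He; destruct (cp eps He) as [U [oU [Ux HU]]].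
  exists (fun w => U (m w)); repeat split; auto.
Qed.

(* A supremum operator on sets of reals; it is the least upper bound
   whenever the set is nonempty and bounded above. *)
Definition Rsup (E : R -> Prop) : R :=
  epsilon (inhabits 0) (fun m => bound E -> (exists x, E x) -> is_lub E m).

Lemma Rsup_spec E b : (forall r, E r -> r <= b) -> (exists x, E x) -> is_lub E (Rsup E).
Proof.
  intros hb hn. unfold Rsup. apply (epsilon_spec (inhabits 0) (fun m => bound E -> (exists x, E x) -> is_lub E m)); [|exists b; auto| auto].
  destruct (classic (bound E /\ exists x, E x)) as [[hB hN]|h].
  - destruct (completeness E hB hN) as [m hm]. exists m; auto.
  - exists 0; intros hB hN; exfalso; auto.
Qed.

Lemma Rsup_ub E b r : (forall r, E r -> r <= b) -> E r -> r <= Rsup E.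
Proof. intros hb Er. apply (Rsup_spec E b hb (ex_intro _ r Er)); auto. Qed.

Lemma Rsup_least E b : (exists x, E x) -> (forall r, E r -> r <= b) -> Rsup E <= b.
Proof. intros hn hb. apply (Rsup_spec E b hb hn). intros r Er; auto. Qed.

Lemma Rsup_approx E b eps : (exists x, E x) -> (forall r, E r -> r <= b) -> 0 < eps ->
  exists r, E r /\ Rsup E - eps < r.
Proof.
  intros hn hb he. apply NNPP; intros H.
  assert (Rsup E <= Rsup E - eps); [|lra].
  apply Rsup_least; auto. intros r Er. apply Rnot_lt_le. intros h; apply H; eauto.
Qed.

Lemma nat_floor z : 0 <= z -> exists k : nat, INR k <= z < INR k + 1.
Proof.
  intros hz. destruct (archimed z) as [h1 h2].
  assert (hm : (0 < up z)%Z) by (apply lt_0_IZR; lra).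
  exists (Z.to_nat (up z - 1)). rewrite INR_IZR_INZ, Z2Nat.id by lia.
  rewrite minus_IZR. simpl. lra.
Qed.

Lemma nat_lt_pow2 n : (n < 2 ^ n)%nat.
Proof. induction n; simpl; lia. Qed.

Lemma pow2_pos n : 0 < INR (2 ^ n).
Proof. apply lt_0_INR. pose proof (nat_lt_pow2 n); lia. Qed.

Lemma exists_big_pow eps c : 0 < eps -> exists n, c < INR (2 ^ n) * eps.
Proof.
  intros he. destruct (nat_floor (Rmax 0 (c / eps))) as [k [hk1 hk2]]; [apply Rmax_l|].
  exists (S k). pose proof (nat_lt_pow2 (S k)) as hlt. apply lt_INR in hlt. rewrite S_INR in hlt.
  assert (hc : c / eps < INR (2 ^ S k)) by (pose proof (Rmax_r 0 (c/eps)); lra).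
  apply (Rmult_lt_compat_r eps) in hc; auto. unfold Rdiv in hc.
  rewrite Rmult_assoc, Rinv_l in hc by lra. lra.
Qed.

Definition dyadic (n k : nat) : R := INR k / INR (2 ^ n).

Lemma dyadic_ge0 n k : 0 <= dyadic n k.
Proof. unfold dyadic. apply Rle_mult_inv_pos; [apply pos_INR| apply pow2_pos]. Qed.

Lemma dyadic_le1 n k : (k <= 2 ^ n)%nat -> dyadic n k <= 1.
Proof.
  intros h. unfold dyadic. pose proof (pow2_pos n). apply le_INR in h.
  apply (Rmult_le_reg_r (INR (2^n))); auto. unfold Rdiv; rewrite Rmult_assoc, Rinv_l by lra. lra.
Qed.

Lemma dyadic_lt_nat m j n k : dyadic m j < dyadic n k -> (j * 2 ^ n < k * 2 ^ m)%nat.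
Proof.
  unfold dyadic. intros h. pose proof (pow2_pos m); pose proof (pow2_pos n).
  apply INR_lt. rewrite !mult_INR.
  apply (Rmult_lt_compat_r (INR (2^m) * INR (2^n))) in h; [|nra].
  replace (INR j / INR (2 ^ m) * (INR (2 ^ m) * INR (2 ^ n))) with (INR j * INR (2^n)) in h by (field; lra).
  replace (INR k / INR (2 ^ n) * (INR (2 ^ m) * INR (2 ^ n))) with (INR k * INR (2^m)) in h by (field; lra).
  auto.
Qed.

Lemma dyadic_bracket a eps : 0 < eps -> eps <= a <= 1 ->
  exists n k, (S k <= 2 ^ n)%nat /\ dyadic n (S k) < a /\ a - eps < dyadic n k.
Proof.
  intros he ha. destruct (exists_big_pow eps 3 he) as [n hn].
  pose proof (pow2_pos n) as hp.
  destruct (nat_floor (a * INR (2 ^ n))) as [k0 [hk1 hk2]]; [nra|].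
  assert (hk0 : (3 <= k0)%nat).
  { assert (h2 : 2 < INR k0) by nra. destruct (le_lt_dec 3 k0) as [|hlt]; auto.
    assert (INR k0 <= INR 2) by (apply le_INR; lia). simpl in *. lra. }
  exists n, (k0 - 2)%nat.
  assert (hkR : INR (k0 - 2) = INR k0 - 2) by (rewrite minus_INR by lia; simpl; lra).
  assert (hk1R : INR (S (k0 - 2)) = INR k0 - 1) by (rewrite S_INR; lra).
  unfold dyadic; rewrite hkR, hk1R. repeat split.
  - apply INR_le. rewrite hk1R. nra.
  - apply (Rmult_lt_reg_r (INR (2^n))); auto.
    unfold Rdiv; rewrite Rmult_assoc, Rinv_l by lra. lra.
  - apply (Rmult_lt_reg_r (INR (2^n))); auto.
    unfold Rdiv; rewrite Rmult_assoc, Rinv_l by lra. nra.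
Qed.
Section Urysohn.
Context {X : TopSpace} (HX : hausdorff X) (LC : locally_compact X).

Lemma shrink_pt (U : X -> Prop) x : open U -> U x ->
  exists N L, open N /\ tcompact L /\ N x /\ (forall y, N y -> L y) /\ (forall y, L y -> U y).
Proof.
  intros oU Ux. destruct (LC x) as [W [K [oW [Wx [WK cK]]]]].
  pose proof (compact_minus_open HX K U cK oU) as cD.
  destruct (sep_point_compact HX (fun y => K y /\ ~ U y) x cD)
    as [A [B [oA [oB [Ax [DB dis]]]]]]; [tauto|].
  exists (fun y => W y /\ A y), (fun y => K y /\ ~ B y).
  split; [|split; [|split; [|split]]].
  - apply open_inter; auto.
  - apply compact_minus_open; auto.
  - split; auto.
  - intros y [Wy Ay]; split; auto. intros By. apply (dis y); auto.
  - intros y [Ky nBy]. apply NNPP; intros nUy. apply nBy, DB. split; auto.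
Qed.

Lemma shrink (K U : X -> Prop) : tcompact K -> open U -> (forall x, K x -> U x) ->
  exists V L, open V /\ tcompact L /\ (forall x, K x -> V x) /\ (forall x, V x -> L x) /\
    (forall x, L x -> U x).
Proof.
  intros cK oU KU.
  assert (H : forall k : {k | K k}, exists NL : (X -> Prop) * (X -> Prop),
    open (fst NL) /\ tcompact (snd NL) /\ fst NL (proj1_sig k) /\ (forall y, fst NL y -> snd NL y) /\
    (forall y, snd NL y -> U y)).
  { intros [k Kk]. destruct (shrink_pt U k oU (KU k Kk)) as [N [L h]]. exists (N, L); simpl; tauto. }
  destruct (choice _ H) as [g Hg].
  destruct (cK {k | K k} (fun k => fst (g k))) as [l Hl].
  - intros k; apply Hg.
  - intros x Kx; exists (exist _ x Kx); apply Hg.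
  - exists (fun z => exists k, In k l /\ fst (g k) z), (fun z => exists k, In k l /\ snd (g k) z).
    repeat split.
    + apply open_funion; intros; apply Hg.
    + apply compact_funion; intros; apply Hg.
    + intros x Kx; apply Hl; auto.
    + intros x [k [Hk h]]; exists k; split; auto; apply Hg; auto.
    + intros x [k [Hk h]]; apply (Hg k); auto.
Qed.

Definition OCPair := ((X -> Prop) * (X -> Prop))%type.
Definition nested (p : OCPair) :=
  open (fst p) /\ tcompact (snd p) /\ forall x, fst p x -> snd p x.

Lemma interpose_ex (A B : X -> Prop) : exists p : OCPair, nested p /\
  ((tcompact A /\ open B /\ forall x, A x -> B x) ->
   (forall x, A x -> fst p x) /\ (forall x, snd p x -> B x)).
Proof.
  destruct (classic (tcompact A /\ open B /\ forall x, A x -> B x)) as [[h1 [h2 h3]]|h].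
  - destruct (shrink A B h1 h2 h3) as [V [L h]]. exists (V, L); unfold nested; simpl; tauto.
  - exists ((fun _ => False), (fun _ => False)); unfold nested; simpl; repeat split; try tauto.
    + apply open_empty.
    + apply compact_empty.
Qed.

(* A chosen pair A <= V <= L <= B between a compact A and an open B
   (an arbitrary nested pair when A, B are not of this form). *)
Definition interpose A B : OCPair :=
  proj1_sig (constructive_indefinite_description _ (interpose_ex A B)).

Lemma interpose_nested A B : nested (interpose A B).
Proof. unfold interpose; destruct (constructive_indefinite_description _ _) as [p Hp]; apply Hp. Qed.

Lemma interpose_spec A B : tcompact A -> open B -> (forall x, A x -> B x) ->
  (forall x, A x -> fst (interpose A B) x) /\ (forall x, snd (interpose A B) x -> B x).
Proof.
  intros; unfold interpose; destruct (constructive_indefinite_description _ _) as [p Hp].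
  apply Hp; auto.
Qed.

Variables K U : X -> Prop.
Hypothesis cK : tcompact K.
Hypothesis oU : open U.
Hypothesis KU : forall x, K x -> U x.

(* The two ends of the dyadic ladder: K <= V_0 <= L_0 <= V_1 <= L_1 <= U. *)
Definition top_pair := interpose K U.
Definition bottom_pair := interpose K (fst top_pair).

Lemma top_pair_spec : (forall x, K x -> fst top_pair x) /\ (forall x, snd top_pair x -> U x).
Proof. apply interpose_spec; auto. Qed.

Lemma bottom_pair_spec :
  (forall x, K x -> fst bottom_pair x) /\ (forall x, snd bottom_pair x -> fst top_pair x).
Proof. apply interpose_spec; auto; [apply interpose_nested| apply top_pair_spec]. Qed.

(* The pair (V_r, L_r) attached to the dyadic r = k / 2^n: even numerators
   come from the previous level, odd ones are interposed between the two
   neighbouring pairs of that level. *)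
Fixpoint ladder (n k : nat) : OCPair :=
  match n with
  | O => if Nat.eqb k 0 then bottom_pair else top_pair
  | S n => if Nat.even k then ladder n (Nat.div2 k)
           else interpose (snd (ladder n (Nat.div2 k))) (fst (ladder n (S (Nat.div2 k))))
  end.

Lemma ladder_nested n k : nested (ladder n k).
Proof.
  revert k; induction n; intros k; simpl.
  - destruct (Nat.eqb k 0); apply interpose_nested.
  - destruct (Nat.even k); auto. apply interpose_nested.
Qed.

Lemma ladder_even q i : ladder (S q) (2 * i) = ladder q i.
Proof. cbn -[Nat.even Nat.div2 Nat.mul]. rewrite Nat.even_even, Nat.div2_double. auto. Qed.

Lemma ladder_odd q i :
  ladder (S q) (S (2 * i)) = interpose (snd (ladder q i)) (fst (ladder q (S i))).
Proof.
  cbn -[Nat.even Nat.div2 Nat.mul]. rewrite Nat.even_succ, Nat.div2_succ_double.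
  replace (Nat.odd (2 * i)) with false; auto.
  unfold Nat.odd; rewrite Nat.even_even; auto.
Qed.

Lemma ladder_succ n k : (k < 2 ^ n)%nat ->
  forall x, snd (ladder n k) x -> fst (ladder n (S k)) x.
Proof.
  revert k; induction n; intros k hk.
  - simpl in hk. assert (k = 0)%nat by lia. subst. simpl. apply bottom_pair_spec.
  - assert (hnest : forall i, (i < 2 ^ n)%nat ->
      forall x, snd (ladder n i) x -> fst (ladder n (S i)) x) by auto.
    destruct (Nat.Even_or_Odd k) as [[i ->]|[i ->]].
    + rewrite ladder_even, ladder_odd.
      apply interpose_spec; [apply ladder_nested|apply ladder_nested|apply hnest; simpl in hk; lia].
    + replace (2 * i + 1)%nat with (S (2 * i)) by lia.
      replace (S (S (2 * i))) with (2 * S i)%nat by lia.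
      rewrite ladder_even, ladder_odd.
      apply interpose_spec; [apply ladder_nested|apply ladder_nested|apply hnest; simpl in hk; lia].
Qed.

Lemma ladder_lift n p k : ladder (n + p) (k * 2 ^ p) = ladder n k.
Proof.
  induction p.
  - rewrite Nat.add_0_r, Nat.pow_0_r, Nat.mul_1_r; auto.
  - rewrite Nat.add_succ_r, Nat.pow_succ_r'.
    replace (k * (2 * 2 ^ p))%nat with (2 * (k * 2 ^ p))%nat by lia.
    rewrite ladder_even; auto.
Qed.

Lemma ladder_chain n i j : (i < j)%nat -> (j <= 2 ^ n)%nat ->
  forall x, snd (ladder n i) x -> fst (ladder n j) x.
Proof.
  induction j; intros hij hj; [lia|].
  destruct (Nat.eq_dec i j) as [->|hne].
  - apply ladder_succ; lia.
  - intros x hx. apply ladder_succ; [lia|]. apply (ladder_nested n j). apply IHj; auto; lia.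
Qed.

Lemma ladder_order m j n k : (j <= 2 ^ m)%nat -> (k <= 2 ^ n)%nat -> dyadic m j < dyadic n k ->
  forall x, snd (ladder m j) x -> fst (ladder n k) x.
Proof.
  intros hj hk hd. apply dyadic_lt_nat in hd.
  rewrite <- (ladder_lift m n j), <- (ladder_lift n m k), (Nat.add_comm n m).
  apply ladder_chain; auto.
  rewrite Nat.pow_add_r, (Nat.mul_comm (2^m)). apply Nat.mul_le_mono_r; auto.
Qed.

Definition ury_values x r :=
  r = 0 \/ exists n k, (k <= 2 ^ n)%nat /\ fst (ladder n k) x /\ r = 1 - dyadic n k.

Definition ury x := Rsup (ury_values x).

Lemma ury_values_le1 x r : ury_values x r -> r <= 1.
Proof. intros [->|[n [k [_ [_ ->]]]]]; [lra| pose proof (dyadic_ge0 n k); lra]. Qed.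

Lemma ury_values_ne x : exists r, ury_values x r.
Proof. exists 0; left; auto. Qed.

Lemma ury_ge r x : ury_values x r -> r <= ury x.
Proof. intros h; apply (Rsup_ub _ 1); auto. apply ury_values_le1. Qed.

Lemma ury_range x : 0 <= ury x <= 1.
Proof.
  split; [apply ury_ge; left; auto|].
  apply Rsup_least; [apply ury_values_ne| apply ury_values_le1].
Qed.

Lemma ury_K x : K x -> ury x = 1.
Proof.
  intros Kx. apply Rle_antisym; [apply ury_range|]. apply ury_ge. right. exists 0%nat, 0%nat.
  repeat split; [simpl; lia| simpl; apply bottom_pair_spec; auto| unfold dyadic; simpl; lra].
Qed.

Lemma ury_le_outside n k y : (k <= 2 ^ n)%nat -> ~ snd (ladder n k) y -> ury y <= 1 - dyadic n k.
Proof.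
  intros hk hy. apply Rsup_least; [apply ury_values_ne|].
  intros r [->|[m [j [hj [hW ->]]]]].
  - pose proof (dyadic_le1 n k hk); lra.
  - destruct (Rlt_dec (dyadic m j) (dyadic n k)) as [hl|hl]; [|lra].
    exfalso; apply hy. apply (ladder_nested n k).
    apply (ladder_order m j n k); auto. apply (ladder_nested m j); auto.
Qed.

Lemma ury_out x : ~ snd top_pair x -> ury x = 0.
Proof.
  intros hx. apply Rle_antisym; [|apply ury_range].
  pose proof (ury_le_outside 0 1 x (le_n _) hx). unfold dyadic in *; simpl in *. lra.
Qed.

(* Lower semicontinuity: the V_r are open. *)
Lemma ury_lower x eps : 0 < eps ->
  exists O, open O /\ O x /\ forall y, O y -> ury x - eps < ury y.
Proof.
  intros he. destruct (Rlt_dec (ury x) eps) as [hlt|hge].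
  - exists (fun _ => True); repeat split; [apply open_full|].
    intros y _; pose proof (ury_range y); lra.
  - destruct (Rsup_approx (ury_values x) 1 eps (ury_values_ne x) (ury_values_le1 x) he)
      as [r [Er hr]]. fold (ury x) in hr.
    destruct Er as [->|[n [k [hk [hW ->]]]]]; [lra|].
    exists (fst (ladder n k)); repeat split; auto; [apply ladder_nested|].
    intros y hy. eapply Rlt_le_trans; [apply hr|]. apply ury_ge. right; exists n, k; auto.
Qed.

(* Upper semicontinuity: the L_r are closed. *)
Lemma ury_upper x eps : 0 < eps ->
  exists O, open O /\ O x /\ forall y, O y -> ury y < ury x + eps.
Proof.
  intros he. destruct (Rlt_dec 1 (ury x + eps)) as [hlt|hge].
  - exists (fun _ => True); repeat split; [apply open_full|].
    intros y _; pose proof (ury_range y); lra.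
  - destruct (dyadic_bracket (1 - ury x) eps he) as [n [k [hSk [d1 d2]]]];
      [pose proof (ury_range x); lra|].
    assert (nx : ~ snd (ladder n k) x).
    { intros hx. apply ladder_succ in hx; [|lia].
      assert (1 - dyadic n (S k) <= ury x) by (apply ury_ge; right; exists n, (S k); auto).
      lra. }
    exists (fun y => ~ snd (ladder n k) y); repeat split; auto.
    + apply compact_closed; auto; apply ladder_nested.
    + intros y hy. pose proof (ury_le_outside n k y ltac:(lia) hy). lra.
Qed.

Lemma ury_cont : rcont ury.
Proof.
  intros x eps he.
  destruct (ury_lower x eps he) as [O1 [oO1 [O1x H1]]].
  destruct (ury_upper x eps he) as [O2 [oO2 [O2x H2]]].
  exists (fun y => O1 y /\ O2 y); repeat split; auto; [apply open_inter; auto|].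
  intros y [h1 h2]. specialize (H1 y h1); specialize (H2 y h2). apply Rabs_def1; lra.
Qed.

Lemma urysohn :
  exists g : X -> R, rcont g /\ (forall x, 0 <= g x <= 1) /\ (forall x, K x -> g x = 1) /\
    exists L, tcompact L /\ (forall x, L x -> U x) /\ (forall x, ~ L x -> g x = 0).
Proof.
  exists ury. split; [apply ury_cont|]. split; [apply ury_range|].
  split; [intros; apply ury_K; auto|].
  exists (snd top_pair). split; [apply interpose_nested|]. split.
  - apply top_pair_spec.
  - intros; apply ury_out; auto.
Qed.

End Urysohn.
Lemma in_list_max (l : list nat) n : In n l -> (n <= fold_right Nat.max 0 l)%nat.
Proof.
  induction l as [|a l IH]; simpl; [intros []|].
  intros [->|h]; [lia| specialize (IH h); lia].
Qed.

Section C0Space.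
Context {X : TopSpace}.

(* A continuous real function is bounded above on a compact set: the sets
   {phi < n} form an open cover. *)
Lemma compact_bounded (phi : X -> R) (K : X -> Prop) :
  rcont phi -> tcompact K -> exists B, forall x, K x -> phi x <= B.
Proof.
  intros cp cK. destruct (cK nat (fun n x => phi x < INR n)) as [l hl].
  - intros n; apply open_lt; auto.
  - intros x _. destruct (nat_floor (Rmax 0 (phi x))) as [k [_ hk]]; [apply Rmax_l|].
    exists (S k). rewrite S_INR. pose proof (Rmax_r 0 (phi x)). lra.
  - exists (INR (fold_right Nat.max 0%nat l)). intros x Kx.
    destruct (hl x Kx) as [n [hn hx]].
    pose proof (le_INR _ _ (in_list_max l n hn)). lra.
Qed.

Definition zero_fn : X -> C := fun _ => C0c.

Lemma in_C0_ext (f g : X -> C) : (forall x, f x = g x) -> in_C0 g -> in_C0 f.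
Proof. intros H h. replace f with g; auto. apply functional_extensionality; intros; auto. Qed.

Lemma in_C0_zero : in_C0 zero_fn.
Proof.
  split.
  - intros x. refine (cc_of_rc _ x _ _); apply (rc_ext _ (fun _ => 0)); try (intros; reflexivity); apply rc_const.
  - intros eps he; exists (fun _ => False); split; [apply compact_empty|].
    intros; unfold zero_fn; rewrite Cnorm_C0c; auto.
Qed.

Lemma in_C0_lin (a : C) (f g : X -> C) : in_C0 f -> in_C0 g ->
  in_C0 (fun x => Cadd (Cmul a (f x)) (g x)).
Proof.
  intros [cf vf] [cg vg]. split.
  - intros x. refine (cc_of_rc _ x _ _).
    + apply (rc_ext _ (fun y => fst a * fst (f y) - snd a * snd (f y) + fst (g y))); [intros; reflexivity|].
      apply rc_plus; [apply rc_minus; apply rc_mult|]; try apply rc_const;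
        [exact (cc_fst f x (cf x))| exact (cc_snd f x (cf x))| exact (cc_fst g x (cg x))].
    + apply (rc_ext _ (fun y => fst a * snd (f y) + snd a * fst (f y) + snd (g y))); [intros; reflexivity|].
      apply rc_plus; [apply rc_plus; apply rc_mult|]; try apply rc_const;
        [exact (cc_snd f x (cf x))| exact (cc_fst f x (cf x))| exact (cc_snd g x (cg x))].
  - intros eps he. pose proof (Cnorm_ge0 a).
    destruct (vf (eps / 2 / (Cnorm a + 1))) as [K1 [cK1 h1]]; [apply Rdiv_lt_0_compat; lra|].
    destruct (vg (eps / 2)) as [K2 [cK2 h2]]; [lra|].
    exists (fun x => K1 x \/ K2 x); split; [apply compact_union; auto|].
    intros x hx. eapply Rle_lt_trans; [apply Cnorm_triang|]. rewrite Cnorm_mul.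
    assert (hf : Cnorm (f x) < eps / 2 / (Cnorm a + 1)) by (apply h1; tauto).
    assert (hg : Cnorm (g x) < eps / 2) by (apply h2; tauto).
    assert (Cnorm a * Cnorm (f x) <= eps / 2).
    { assert (Cnorm (f x) * (Cnorm a + 1) < eps / 2).
      { apply (Rmult_lt_compat_r (Cnorm a + 1)) in hf; [|lra].
        replace (eps / 2 / (Cnorm a + 1) * (Cnorm a + 1)) with (eps/2) in hf by (field; lra). lra. }
      pose proof (Cnorm_ge0 (f x)). nra. }
    lra.
Qed.

Lemma in_C0_scale (a : C) (f : X -> C) : in_C0 f -> in_C0 (fun x => Cmul a (f x)).
Proof.
  intros h. apply (in_C0_ext _ (fun x => Cadd (Cmul a (f x)) (zero_fn x))).
  - intros x; apply Cpair_eq; simpl; ring.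
  - apply in_C0_lin; auto; apply in_C0_zero.
Qed.

Lemma in_C0_add (f g : X -> C) : in_C0 f -> in_C0 g -> in_C0 (fun x => Cadd (f x) (g x)).
Proof.
  intros h1 h2. apply (in_C0_ext _ (fun x => Cadd (Cmul (1,0) (f x)) (g x))).
  - intros x; apply Cpair_eq; simpl; ring.
  - apply in_C0_lin; auto.
Qed.

(* Elements of C_0(X) are bounded: by compactness on the set where |f| >= 1. *)
Lemma in_C0_bounded (f : X -> C) : in_C0 f -> exists B, 0 <= B /\ forall x, Cnorm (f x) <= B.
Proof.
  intros [cf vf]. destruct (vf 1) as [K [cK hK]]; [lra|].
  destruct (compact_bounded (fun x => Cnorm (f x)) K) as [B hB]; auto.
  { intros x; exact (cc_norm f x (cf x)). }
  exists (Rmax 1 B). split; [pose proof (Rmax_l 1 B); lra|].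
  intros x. destruct (classic (K x)) as [Kx|nKx].
  - pose proof (hB x Kx); pose proof (Rmax_r 1 B); lra.
  - pose proof (hK x nKx); pose proof (Rmax_l 1 B); lra.
Qed.

Section Dual.
Variable omega : (X -> C) -> C.
Hypothesis homega : in_C0_dual omega.

Lemma dual_bound : exists M, 0 < M /\ forall f c, in_C0 f -> 0 <= c ->
  (forall x, Cnorm (f x) <= c) -> Cnorm (omega f) <= M * c.
Proof.
  destruct homega as [_ [M hM]]. exists (Rabs M + 1). split; [pose proof (Rabs_pos M); lra|].
  intros f c hf hc hb. eapply Rle_trans; [apply (hM f c hf hb)|].
  pose proof (Rle_abs M). nra.
Qed.

Lemma dual_zero : omega zero_fn = C0c.
Proof.
  destruct dual_bound as [M [hM hb]]. apply Cnorm_eq0.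
  pose proof (hb zero_fn 0 in_C0_zero (Rle_refl 0)) as h. rewrite Rmult_0_r in h. apply h.
  intros; unfold zero_fn; rewrite Cnorm_C0c; lra.
Qed.

Lemma dual_scale (a : C) (f : X -> C) : in_C0 f ->
  omega (fun x => Cmul a (f x)) = Cmul a (omega f).
Proof.
  intros h. transitivity (omega (fun x => Cadd (Cmul a (f x)) (zero_fn x))).
  - f_equal; apply functional_extensionality; intros x; apply Cpair_eq; simpl; ring.
  - rewrite (proj1 homega a f zero_fn h in_C0_zero), dual_zero. apply Cpair_eq; simpl; ring.
Qed.

Lemma dual_add (f g : X -> C) : in_C0 f -> in_C0 g ->
  omega (fun x => Cadd (f x) (g x)) = Cadd (omega f) (omega g).
Proof.
  intros h1 h2. transitivity (omega (fun x => Cadd (Cmul (1,0) (f x)) (g x))).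
  - f_equal; apply functional_extensionality; intros x; apply Cpair_eq; simpl; ring.
  - rewrite (proj1 homega (1,0) f g h1 h2). apply Cpair_eq; simpl; ring.
Qed.

Lemma dual_sub (f g : X -> C) : in_C0 f -> in_C0 g ->
  omega (fun x => Cadd (f x) (Copp (g x))) = Cadd (omega f) (Copp (omega g)).
Proof.
  intros h1 h2. transitivity (omega (fun x => Cadd (Cmul (-1,0) (g x)) (f x))).
  - f_equal; apply functional_extensionality; intros x; apply Cpair_eq; simpl; ring.
  - rewrite (proj1 homega (-1,0) g f h2 h1). apply Cpair_eq; simpl; ring.
Qed.

Lemma dual_rotate (g : X -> C) : in_C0 g ->
  exists u, Cnorm u = 1 /\ fst (omega (fun x => Cmul u (g x))) = Cnorm (omega g).
Proof.
  intros h. destruct (Req_dec (Cnorm (omega g)) 0) as [h0|h0].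
  - exists (1, 0). split; [rewrite Cnorm_real, Rabs_R1; auto|].
    rewrite dual_scale by auto. rewrite h0.
    assert (omega g = C0c) by (apply Cnorm_eq0; lra). rewrite H; simpl; ring.
  - set (n := Cnorm (omega g)). pose proof (Cnorm_ge0 (omega g)).
    pose proof (Cnorm_sq (omega g)) as hsq. fold n in hsq.
    exists (fst (omega g) / n, - snd (omega g) / n). split.
    + unfold Cnorm at 1; simpl.
      replace (fst (omega g) / n * (fst (omega g) / n) + - snd (omega g) / n * (- snd (omega g) / n))
        with 1; [apply sqrt_1|].
      field_simplify; [|unfold n; auto].
      replace (fst (omega g) ^ 2 + snd (omega g) ^ 2) with (n*n) by (rewrite hsq; ring).
      field. unfold n; auto.
    + rewrite dual_scale by auto. simpl.
      apply Rmult_eq_reg_r with n; [|unfold n; auto].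
      rewrite hsq. field. unfold n; auto.
Qed.

End Dual.
End C0Space.
Section Action.
Context {G : TopGroup} {X : TopSpace} {act : G -> X -> X}.
Hypothesis ca : continuous_action G X act.

Lemma act_mul s t x : act (gmul G s t) x = act s (act t x).
Proof. apply (proj1 (proj2 ca)). Qed.
Lemma act_one x : act (gone G) x = x.
Proof. apply (proj1 ca). Qed.
Lemma act_inv_l s x : act (ginv G s) (act s x) = x.
Proof. rewrite <- act_mul, gmulVl, act_one; auto. Qed.
Lemma act_inv_r s x : act s (act (ginv G s) x) = x.
Proof. rewrite <- act_mul, gmulVr, act_one; auto. Qed.

Lemma act_cont_x (s : G) : tcontinuous (fun x => act s x).
Proof.
  apply (cont2_comp act (fun _ => s) (fun x => x));
    [apply ca| apply cont_const| apply cont_id].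
Qed.

Lemma act_cont_orbit (u : G -> G) (x : X) :
  tcontinuous u -> tcontinuous (fun s => act (u s) x).
Proof. intros cu. apply (cont2_comp act u (fun _ => x)); [apply ca| auto| apply cont_const]. Qed.

Lemma alpha_C0 (f : X -> C) s : in_C0 f -> in_C0 (alpha G X act s f).
Proof.
  intros [cf vf]. split.
  - intros x. apply (cc_map (fun x => act (ginv G s) x) f x); [apply act_cont_x| exact (cf _)].
  - intros eps he. destruct (vf eps he) as [K [cK hK]].
    exists (fun y => K (act (ginv G s) y)). split.
    + apply (compact_image (fun x => act s x) K); auto.
      * apply act_cont_x.
      * intros x Kx; rewrite act_inv_l; auto.
      * intros y hy. exists (act (ginv G s) y); split; auto; apply act_inv_r.
    + intros x hx; apply hK; auto.
Qed.

Lemma act_local_uniform (f : X -> C) (x0 : X) d : ccontinuous f -> 0 < d ->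
  exists A B, open A /\ open B /\ A (gone G) /\ B x0 /\
    (forall a b, A a -> B b -> Cdist (f (act a b)) (f x0) < d) /\
    (forall b, B b -> Cdist (f b) (f x0) < d).
Proof.
  intros cf hd. destruct (cf x0 d hd) as [O [oO [Ox HO]]].
  destruct (proj2 (proj2 ca) O oO (gone G) x0) as [A [B [oA [oB [Ae [Bx HAB]]]]]].
  { rewrite act_one; auto. }
  exists A, (fun y => B y /\ O y). repeat split; auto.
  - apply open_inter; auto.
  - intros a b ha [hb _]. apply HO; auto.
  - intros b [_ hb]; apply HO; auto.
Qed.

(* Points y with y or r . y in
   the compact set where |f| >= eps/2 are handled by a finite cover; at the
   remaining points both values are small. *)
Lemma act_uniform (f : X -> C) eps : in_C0 f -> 0 < eps ->
  exists N, open N /\ N (gone G) /\ forall r y, N r -> Cdist (f (act r y)) (f y) < eps.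
Proof.
  intros [cf vf] he. set (d := eps / 2).
  destruct (vf d) as [K [cK hK]]; [unfold d; lra|].
  assert (H : forall k : {k | K k}, exists AB : (G -> Prop) * (X -> Prop),
    open (fst AB) /\ open (snd AB) /\ fst AB (gone G) /\ snd AB (proj1_sig k) /\
    (forall a b, fst AB a -> snd AB b -> Cdist (f (act a b)) (f (proj1_sig k)) < d) /\
    (forall b, snd AB b -> Cdist (f b) (f (proj1_sig k)) < d)).
  { intros [k Kk]. destruct (act_local_uniform f k d cf) as [A [B h]]; [unfold d; lra|].
    exists (A, B); exact h. }
  destruct (choice _ H) as [AB HAB].
  destruct (cK _ (fun k => snd (AB k))) as [l Hl].
  { intros; apply HAB. } { intros x Kx; exists (exist _ x Kx); apply HAB. }
  set (N0 := fun r => forall k, In k l -> fst (AB k) r).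
  assert (oN0 : open N0) by (apply open_finter; intros; apply HAB).
  (* Within eps of f y through a point k of the cover near y or near r . y. *)
  assert (near : forall k a z z', In k l -> fst (AB k) a -> snd (AB k) z -> z' = act a z ->
      Cdist (f z') (f z) < eps).
  { intros k a z z' hk ha hz ->.
    destruct (HAB k) as [_ [_ [_ [_ [h1 h2]]]]].
    pose proof (h1 a z ha hz); pose proof (h2 z hz).
    pose proof (Cdist_triang (f (act a z)) (f z) (f (proj1_sig k))).
    rewrite (Cdist_sym (f (proj1_sig k))) in *. unfold d in *; lra. }
  exists (fun r => N0 r /\ N0 (ginv G r)). split; [|split].
  - apply open_inter; auto. apply (ginv_cont G N0 oN0).
  - rewrite ginv1. split; intros k _; apply HAB.
  - intros r y [h1 h2].
    destruct (classic (K y)) as [Ky|nKy]; [|destruct (classic (K (act r y))) as [Kz|nKz]].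
    + destruct (Hl y Ky) as [k [hk hy]]. apply (near k r y); auto.
    + destruct (Hl _ Kz) as [k [hk hz]]. rewrite Cdist_sym.
      apply (near k (ginv G r) (act r y)); auto. rewrite act_inv_l; auto.
    + pose proof (hK _ nKy); pose proof (hK _ nKz).
      pose proof (Cdist_le (f (act r y)) (f y)). unfold d in *; lra.
Qed.

(* s |-> omega (alpha_s f) is continuous: alpha_s f depends continuously on s
   in the sup norm, and omega is bounded. *)
Lemma slice_cont (omega : (X -> C) -> C) (f : X -> C) : in_C0_dual omega -> in_C0 f ->
  ccontinuous (fun s : G => omega (alpha G X act s f)).
Proof.
  intros hw hf t eps he.
  destruct (dual_bound omega hw) as [M [hM hb]].
  destruct (act_uniform f (eps / (2 * M)) hf) as [N [oN [Ne HN]]]; [apply Rdiv_lt_0_compat; lra|].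
  exists (fun s => N (gmul G (ginv G s) t)). split; [|split].
  - apply (cont2_comp (gmul G) (ginv G) (fun _ => t));
      [apply gmul_cont| apply ginv_cont| apply cont_const| exact oN].
  - rewrite gmulVl; auto.
  - intros s hs. rewrite <- (dual_sub omega hw) by (apply alpha_C0; auto).
    eapply Rle_lt_trans.
    + apply (hb _ (eps / (2 * M))).
      * apply in_C0_add; [apply alpha_C0; auto|].
        apply (in_C0_ext _ (fun x => Cmul (-1, 0) (alpha G X act t f x))).
        { intros; apply Cpair_eq; simpl; ring. }
        apply in_C0_scale, alpha_C0; auto.
      * left; apply Rdiv_lt_0_compat; lra.
      * intros x. left. unfold alpha.
        replace (act (ginv G s) x) with (act (gmul G (ginv G s) t) (act (ginv G t) x)).
        { apply HN; auto. }
        rewrite <- act_mul, <- gmulA, gmulVr, gmul1r; auto.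
    + replace (M * (eps / (2 * M))) with (eps / 2) by (field; lra). lra.
Qed.

End Action.

(* Slice properness implies properness of the orbit maps: test it on the point
   evaluation at x and on a Urysohn function equal to 1 on K. *)
Lemma orbit_proper_of_slice_proper (G : TopGroup) (X : TopSpace) (act : G -> X -> X) :
  hausdorff X -> locally_compact X -> continuous_action G X act -> slice_proper G X act ->
  forall (x : X) (K : X -> Prop), tcompact K -> tcompact (fun s : G => K (act s x)).
Proof.
  intros HX LX ca sp x K cK.
  destruct (urysohn HX LX K (fun _ => True) cK (open_full X) (fun _ _ => I))
    as [g [gc [gr [gK [L [cL [_ gL]]]]]]].
  set (f := fun y => (g y, 0) : C).
  assert (fC0 : in_C0 f).
  { split.
    - intros y. refine (cc_of_rc _ y _ _); simpl; [apply gc| apply rc_const].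
    - intros eps he. exists L; split; auto. intros y hy. unfold f.
      rewrite Cnorm_real, gL, Rabs_R0; auto. }
  assert (eval_dual : in_C0_dual (fun h : X -> C => h x)).
  { split; [intros; reflexivity|]. exists 1. intros h c _ hc. specialize (hc x). lra. }
  destruct (proj2 (sp _ f eval_dual fC0) (1/2)) as [L' [cL' hL']]; [lra|].
  apply (compact_ext (fun s => K (act (ginv G (ginv G s)) x))).
  { intros s; rewrite ginvK; tauto. }
  apply (compact_inv (fun s => K (act (ginv G s) x))), (compact_closed_sub L'); auto.
  - apply (act_cont_orbit ca (ginv G) x (ginv_cont G) (fun y => ~ K y)).
    apply compact_closed; auto.
  - intros s hs. apply NNPP; intros nL. specialize (hL' s nL).
    unfold alpha, f in hL'. rewrite Cnorm_real, gK, Rabs_R1 in hL' by auto. lra.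
Qed.
Lemma cc_dominated_zero {X : TopSpace} (p : X -> C) (h : X -> R) x :
  (forall y, Cnorm (p y) <= h y) -> rcont_at h x -> h x = 0 -> ccont_at p x.
Proof.
  intros hp ch h0 eps he. destruct (ch eps he) as [U [oU [Ux HU]]].
  exists U; repeat split; auto. intros y Uy. specialize (HU y Uy). rewrite h0, Rminus_0_r in HU.
  eapply Rle_lt_trans; [apply (Cdist_le (p y) (p x))|].
  pose proof (hp y); pose proof (hp x). pose proof (Rle_abs (h y)). lra.
Qed.

Section Share.
Context {X : TopSpace}.
Variables h k : X -> R.
Hypothesis ch : rcont h.
Hypothesis ck : rcont k.
Hypothesis ph : forall x, 0 <= h x.
Hypothesis pk : forall x, 0 <= k x.

(* The share h / (h + k) of h in h + k (0 where both vanish); it splits a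
   function dominated by h + k into parts dominated by h and by k. *)
Definition share x :=
  match Rlt_dec 0 (h x + k x) with left _ => h x / (h x + k x) | right _ => 0 end.

Lemma share_range x : 0 <= share x <= 1.
Proof.
  unfold share; destruct (Rlt_dec 0 (h x + k x)); [|lra]. specialize (ph x); specialize (pk x).
  split; [apply Rle_mult_inv_pos; lra|]. apply (Rmult_le_reg_r (h x + k x)); auto.
  unfold Rdiv; rewrite Rmult_assoc, Rinv_l by lra. lra.
Qed.

Lemma share_cont_pos x : 0 < h x + k x -> rcont_at share x.
Proof.
  intros pos.
  assert (oO : open (fun y => 0 < h y + k y)) by (apply open_gt; intros y; apply rc_plus; auto).
  apply (rc_local _ (fun y => h y * / (h y + k y)) _ x oO pos).
  - intros y hy. unfold share. destruct (Rlt_dec 0 (h y + k y)); [auto| contradiction].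
  - apply rc_mult; auto. apply rc_inv; auto. apply rc_plus; auto.
Qed.

Lemma share_dominated (g : X -> C) x : Cnorm (g x) <= h x + k x ->
  Cnorm (Cmul (share x, 0) (g x)) <= h x.
Proof.
  intros hg. rewrite Cnorm_scal. pose proof (share_range x). rewrite Rabs_right by lra.
  unfold share in *. destruct (Rlt_dec 0 (h x + k x)).
  - pose proof (Cnorm_ge0 (g x)).
    apply Rle_trans with (h x / (h x + k x) * (h x + k x)).
    + apply Rmult_le_compat_l; lra.
    + right; field; lra.
  - rewrite Rmult_0_l; auto.
Qed.

Lemma share_C0 (g : X -> C) : in_C0 g -> (forall x, Cnorm (g x) <= h x + k x) ->
  in_C0 (fun x => Cmul (share x, 0) (g x)).
Proof.
  intros [cg vg] hg.
  assert (below : forall x, Cnorm (Cmul (share x, 0) (g x)) <= Cnorm (g x)).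
  { intros x. rewrite Cnorm_scal. pose proof (share_range x). rewrite Rabs_right by lra.
    pose proof (Cnorm_ge0 (g x)). nra. }
  split.
  - intros x. destruct (Rlt_dec 0 (h x + k x)) as [pos|npos].
    + pose proof (share_cont_pos x pos) as cs.
      refine (cc_of_rc _ x _ _).
      * apply (rc_ext _ (fun y => share y * fst (g y) - 0 * snd (g y))); [intros; reflexivity|].
        apply rc_minus; apply rc_mult;
          [exact cs| exact (cc_fst g x (cg x))| apply rc_const| exact (cc_snd g x (cg x))].
      * apply (rc_ext _ (fun y => share y * snd (g y) + 0 * fst (g y))); [intros; reflexivity|].
        apply rc_plus; apply rc_mult;
          [exact cs| exact (cc_snd g x (cg x))| apply rc_const| exact (cc_fst g x (cg x))].
    + refine (cc_dominated_zero _ h x _ (ch x) _).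
      * intros y; apply share_dominated, hg.
      * specialize (ph x); specialize (pk x); lra.
  - intros eps he. destruct (vg eps he) as [K [cK hK]]. exists K; split; auto.
    intros x nK. eapply Rle_lt_trans; [apply below| auto].
Qed.
End Share.

Section Variation.
Context {X : TopSpace}.
Variable omega : (X -> C) -> C.
Hypothesis homega : in_C0_dual omega.
Variable M : R.
Hypothesis hb : forall f c, in_C0 f -> 0 <= c -> (forall x, Cnorm (f x) <= c) ->
  Cnorm (omega f) <= M * c.

(* The variation |omega| (h) = sup { Re omega g : g in C_0(X), |g| <= h } of
   omega at a bounded nonnegative h; it plays the role of the integral of h
   against the total variation of the measure representing omega. *)
Definition variation_values (h : X -> R) (r : R) :=
  exists g, in_C0 g /\ (forall x, Cnorm (g x) <= h x) /\ r = fst (omega g).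
Definition variation h := Rsup (variation_values h).
Definition bounded_nonneg (h : X -> R) := exists c, 0 <= c /\ forall x, 0 <= h x <= c.

Lemma variation_values_ne h : (forall x, 0 <= h x) -> exists r, variation_values h r.
Proof.
  intros hp. exists (fst (omega zero_fn)). exists zero_fn. split; [apply in_C0_zero|]. split; auto.
  intros x; unfold zero_fn; rewrite Cnorm_C0c; auto.
Qed.

Lemma variation_values_bound h c : 0 <= c -> (forall x, h x <= c) ->
  forall r, variation_values h r -> r <= M * c.
Proof.
  intros hc hhc r [g [hg [hgh ->]]].
  eapply Rle_trans; [apply Rle_abs|]. eapply Rle_trans; [apply Cnorm_fst|].
  apply hb; auto. intros x; eapply Rle_trans; [apply hgh| apply hhc].
Qed.

Lemma variation_ge h g : bounded_nonneg h -> in_C0 g -> (forall x, Cnorm (g x) <= h x) ->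
  fst (omega g) <= variation h.
Proof.
  intros [c [hc hh]] hg hgh. apply (Rsup_ub _ (M * c)).
  - apply variation_values_bound; auto. intros x; apply hh.
  - exists g; auto.
Qed.

Lemma variation_le h c : (forall x, 0 <= h x) -> 0 <= c -> (forall x, h x <= c) ->
  variation h <= M * c.
Proof.
  intros; apply Rsup_least; [apply variation_values_ne; auto| apply variation_values_bound; auto].
Qed.

Lemma variation_norm h g : bounded_nonneg h -> in_C0 g -> (forall x, Cnorm (g x) <= h x) ->
  Cnorm (omega g) <= variation h.
Proof.
  intros bh hg hgh. destruct (dual_rotate omega homega g hg) as [u [hu hfst]]. rewrite <- hfst.
  apply variation_ge; auto. apply in_C0_scale; auto.
  intros x; rewrite Cnorm_mul, hu, Rmult_1_l; auto.
Qed.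

Lemma variation_mono h1 h2 : (forall x, 0 <= h1 x) -> bounded_nonneg h2 ->
  (forall x, h1 x <= h2 x) -> variation h1 <= variation h2.
Proof.
  intros p1 b2 le. apply Rsup_least; [apply variation_values_ne; auto|].
  intros r [g [hg [hgh ->]]]. apply variation_ge; auto.
  intros x; eapply Rle_trans; [apply hgh| apply le].
Qed.

Lemma variation_ext h1 h2 : (forall x, h1 x = h2 x) -> variation h1 = variation h2.
Proof. intros H; f_equal; apply functional_extensionality; auto. Qed.

Lemma bounded_nonneg_plus h1 h2 : bounded_nonneg h1 -> bounded_nonneg h2 ->
  bounded_nonneg (fun x => h1 x + h2 x).
Proof.
  intros [c1 [hc1 b1]] [c2 [hc2 b2]]. exists (c1 + c2); split; [lra|].
  intros x; specialize (b1 x); specialize (b2 x); lra.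
Qed.

(* Superadditivity: add competitors for h1 and for h2. *)
Lemma variation_super h1 h2 : bounded_nonneg h1 -> bounded_nonneg h2 ->
  variation h1 + variation h2 <= variation (fun x => h1 x + h2 x).
Proof.
  intros b1 b2. pose proof (bounded_nonneg_plus h1 h2 b1 b2) as b12.
  assert (p1 : forall x, 0 <= h1 x) by (destruct b1 as [c [_ hh]]; intros x; apply hh).
  assert (p2 : forall x, 0 <= h2 x) by (destruct b2 as [c [_ hh]]; intros x; apply hh).
  assert (H : forall g2, in_C0 g2 -> (forall x, Cnorm (g2 x) <= h2 x) ->
     variation h1 <= variation (fun x => h1 x + h2 x) - fst (omega g2)).
  { intros g2 hg2 hgh2. apply Rsup_least; [apply variation_values_ne; auto|].
    intros r [g1 [hg1 [hgh1 ->]]].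
    assert (fst (omega (fun x => Cadd (g1 x) (g2 x))) <= variation (fun x => h1 x + h2 x)).
    { apply variation_ge; auto; [apply in_C0_add; auto|].
      intros x; eapply Rle_trans; [apply Cnorm_triang|].
      specialize (hgh1 x); specialize (hgh2 x); lra. }
    rewrite (dual_add omega homega) in H by auto. simpl in H. lra. }
  assert (variation h2 <= variation (fun x => h1 x + h2 x) - variation h1); [|lra].
  apply Rsup_least; [apply variation_values_ne; auto|]. intros r [g2 [hg2 [hgh2 ->]]].
  specialize (H g2 hg2 hgh2). lra.
Qed.

(* Subadditivity on continuous functions: split a competitor for h1 + h2
   into its h1-share and h2-share. *)
Lemma variation_sub h1 h2 : rcont h1 -> rcont h2 -> bounded_nonneg h1 -> bounded_nonneg h2 ->
  variation (fun x => h1 x + h2 x) <= variation h1 + variation h2.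
Proof.
  intros c1 c2 b1 b2.
  assert (p1 : forall x, 0 <= h1 x) by (destruct b1 as [c [_ hh]]; intros x; apply hh).
  assert (p2 : forall x, 0 <= h2 x) by (destruct b2 as [c [_ hh]]; intros x; apply hh).
  apply Rsup_least; [apply variation_values_ne; intros x; specialize (p1 x); specialize (p2 x); lra|].
  intros r [g [hg [hgh ->]]].
  assert (hgh' : forall x, Cnorm (g x) <= h2 x + h1 x) by (intros x; specialize (hgh x); lra).
  set (gA := fun x => Cmul (share h1 h2 x, 0) (g x)).
  set (gB := fun x => Cmul (share h2 h1 x, 0) (g x)).
  assert (split_g : g = fun x => Cadd (gA x) (gB x)).
  { apply functional_extensionality; intros x. unfold gA, gB, share.
    destruct (Rlt_dec 0 (h1 x + h2 x)) as [pa|pa]; destruct (Rlt_dec 0 (h2 x + h1 x)) as [pb|pb]; try lra.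
    - apply Cpair_eq; simpl; field; lra.
    - assert (hz : g x = C0c) by (apply Cnorm_eq0; specialize (hgh x); lra).
      rewrite hz; apply Cpair_eq; simpl; ring. }
  assert (hA : in_C0 gA) by (apply share_C0; auto).
  assert (hB : in_C0 gB) by (apply share_C0; auto).
  rewrite split_g, (dual_add omega homega) by auto. simpl.
  pose proof (variation_ge h1 gA b1 hA (fun x => share_dominated h1 h2 p1 p2 g x (hgh x))).
  pose proof (variation_ge h2 gB b2 hB (fun x => share_dominated h2 h1 p2 p1 g x (hgh' x))).
  lra.
Qed.

Lemma variation_add h1 h2 : rcont h1 -> rcont h2 -> bounded_nonneg h1 -> bounded_nonneg h2 ->
  variation (fun x => h1 x + h2 x) = variation h1 + variation h2.
Proof. intros; apply Rle_antisym; [apply variation_sub| apply variation_super]; auto. Qed.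

(* min h1 h2 + max h1 h2 = h1 + h2, hence by additivity the variations of
   min and max add up to those of h1 and h2. *)
Lemma variation_min_max h1 h2 : rcont h1 -> rcont h2 -> bounded_nonneg h1 -> bounded_nonneg h2 ->
  variation (fun x => Rmin (h1 x) (h2 x)) + variation (fun x => Rmax (h1 x) (h2 x)) =
  variation h1 + variation h2.
Proof.
  intros c1 c2 [b1 [hb1 r1]] [b2 [hb2 r2]].
  assert (bmin : bounded_nonneg (fun x => Rmin (h1 x) (h2 x))).
  { exists b1; split; auto. intros x; specialize (r1 x); specialize (r2 x).
    unfold Rmin; destruct (Rle_dec _ _); lra. }
  assert (bmax : bounded_nonneg (fun x => Rmax (h1 x) (h2 x))).
  { exists (b1 + b2); split; [lra|]. intros x; specialize (r1 x); specialize (r2 x).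
    unfold Rmax; destruct (Rle_dec _ _); lra. }
  rewrite <- !variation_add; auto.
  - apply variation_ext. intros x. unfold Rmin, Rmax. destruct (Rle_dec _ _); lra.
  - exists b1; auto.
  - exists b2; auto.
  - intros x; apply rc_min; auto.
  - intros x; apply rc_max; auto.
Qed.

End Variation.
(* Let (g_n) be a uniformly bounded sequence in C_0(X)
   tending to 0 pointwise; then omega (g_n) cannot stay away from 0.
   Write G_{n,m} = max (|g_n|, ..., |g_(n+m)|) and a_n = sup_m |omega| (G_{n,m})
   (so a_n >= eps).  Choose lengths m_n with |omega| (E_n) > a_n - eps/2^(n+2)
   for the envelopes E_n = G_{n,m_n}; by additivity of the variation the
   running minima v_n = min (E_0, ..., E_n) keep |omega| (v_n) > eps/2.  But the
   v_n decrease to 0 pointwise and v_0 vanishes at infinity, so by a Dini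
   argument v_n becomes uniformly small, and so does |omega| (v_n). *)
Section WeakNull.
Context {X : TopSpace}.
Variable omega : (X -> C) -> C.
Hypothesis homega : in_C0_dual omega.
Variable M : R.
Hypothesis hM : 0 < M.
Hypothesis hb : forall f c, in_C0 f -> 0 <= c -> (forall x, Cnorm (f x) <= c) ->
  Cnorm (omega f) <= M * c.
Variable gs : nat -> X -> C.
Hypothesis gC0 : forall n, in_C0 (gs n).
Variable B0 : R.
Hypothesis hB : forall n x, Cnorm (gs n x) <= B0.
Hypothesis pointwise_null : forall x d, 0 < d ->
  exists N, forall k, (N <= k)%nat -> Cnorm (gs k x) < d.
Variable eps : R.
Hypothesis heps : 0 < eps.
Hypothesis big : forall n, eps <= Cnorm (omega (gs n)).

Let var := variation omega.
Let gbound := Rmax 0 B0.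
Let gabs n x := Cnorm (gs n x).

Lemma gabs_cont n : rcont (gabs n).
Proof. intros x; exact (cc_norm _ x (proj1 (gC0 n) x)). Qed.

Lemma gabs_range n x : 0 <= gabs n x <= gbound.
Proof.
  unfold gabs, gbound. split; [apply Cnorm_ge0|].
  eapply Rle_trans; [apply hB| apply Rmax_r].
Qed.

Fixpoint run_max n m x :=
  match m with O => gabs n x | S m => Rmax (run_max n m x) (gabs (n + S m) x) end.

Lemma run_max_cont n m : rcont (run_max n m).
Proof.
  induction m; intros x; simpl; [apply gabs_cont| apply rc_max; [apply IHm| apply gabs_cont]].
Qed.

Lemma run_max_attained n m x : exists k, (n <= k <= n + m)%nat /\ run_max n m x = gabs k x.
Proof.
  induction m; simpl.
  - exists n; split; [lia| auto].
  - destruct IHm as [k [hk e]]. unfold Rmax.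
    destruct (Rle_dec (run_max n m x) (gabs (n + S m) x)).
    + exists (n + S m)%nat; split; [lia| auto].
    + exists k; split; [lia| auto].
Qed.

Lemma run_max_ge n m k x : (n <= k <= n + m)%nat -> gabs k x <= run_max n m x.
Proof.
  induction m; simpl; intros hk.
  - replace k with n by lia; lra.
  - destruct (Nat.eq_dec k (n + S m)) as [->|ne]; [apply Rmax_r|].
    eapply Rle_trans; [apply IHm; lia| apply Rmax_l].
Qed.

Lemma run_max_mono n m n' m' x : (n <= n')%nat -> (n' + m' <= n + m)%nat ->
  run_max n' m' x <= run_max n m x.
Proof. intros h1 h2. destruct (run_max_attained n' m' x) as [k [hk ->]]. apply run_max_ge; lia. Qed.

Lemma run_max_range n m x : 0 <= run_max n m x <= gbound.
Proof. destruct (run_max_attained n m x) as [k [_ ->]]; apply gabs_range. Qed.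

Lemma run_max_bounded n m : bounded_nonneg (run_max n m).
Proof. exists gbound; split; [apply Rmax_l| apply run_max_range]. Qed.

Lemma run_max_vanishes n m d : 0 < d ->
  exists Q, tcompact Q /\ forall x, ~ Q x -> run_max n m x < d.
Proof.
  intros hd.
  assert (H : forall k, exists K, tcompact K /\ forall x, ~ K x -> gabs k x < d).
  { intros k; apply (proj2 (gC0 k)); auto. }
  destruct (choice _ H) as [Kf HK].
  exists (fun x => exists k, In k (seq n (S m)) /\ Kf k x). split.
  - apply compact_funion; intros; apply HK.
  - intros x hx. destruct (run_max_attained n m x) as [k [hk ->]]. apply HK. intros hk'.
    apply hx; exists k; split; auto. apply in_seq; lia.
Qed.

Definition tail_sup n := Rsup (fun r => exists m, r = var (run_max n m)).

Lemma tail_sup_values_bound n : forall r, (exists m, r = var (run_max n m)) -> r <= M * gbound.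
Proof.
  intros r [m ->]. apply (variation_le omega M hb);
    [intros; apply run_max_range| apply Rmax_l| intros; apply run_max_range].
Qed.

Lemma tail_sup_ge n m : var (run_max n m) <= tail_sup n.
Proof. apply (Rsup_ub _ (M * gbound)); [apply tail_sup_values_bound| eauto]. Qed.

Lemma tail_sup_big n : eps <= tail_sup n.
Proof.
  eapply Rle_trans; [apply (big n)|]. eapply Rle_trans; [|apply (tail_sup_ge n 0)].
  apply (variation_norm omega homega M hb); auto.
  - apply run_max_bounded.
  - intros x; simpl; unfold gabs; lra.
Qed.

(* The tolerated loss eps / 2^(n+2) at step n, summing to less than eps/2. *)
Definition slack n := eps / INR (2 ^ (n + 2)).

Lemma slack_pos n : 0 < slack n.
Proof. unfold slack; apply Rdiv_lt_0_compat; auto; apply pow2_pos. Qed.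

Fixpoint total_slack n := match n with O => 0 | S n => total_slack n + slack n end.

Lemma total_slack_value n : total_slack n = eps / 2 - eps / INR (2 ^ (n + 1)).
Proof.
  induction n; simpl total_slack.
  - simpl. field.
  - rewrite IHn. unfold slack. replace (S n + 1)%nat with (n + 2)%nat by lia.
    replace (INR (2 ^ (n + 2))) with (2 * INR (2 ^ (n + 1))).
    + pose proof (pow2_pos (n + 1)). field. lra.
    + replace (n + 2)%nat with (S (n + 1)) by lia. rewrite Nat.pow_succ_r', mult_INR. simpl; lra.
Qed.

Lemma total_slack_lt n : total_slack n < eps / 2.
Proof.
  rewrite total_slack_value. pose proof (pow2_pos (n + 1)).
  assert (0 < eps / INR (2 ^ (n+1))) by (apply Rdiv_lt_0_compat; lra). lra.
Qed.

Lemma tail_sup_approx n : exists m, tail_sup n - slack n < var (run_max n m).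
Proof.
  destruct (Rsup_approx _ (M * gbound) (slack n) (ex_intro _ _ (ex_intro _ 0%nat eq_refl))
              (tail_sup_values_bound n) (slack_pos n)) as [r [[m ->] h]].
  exists m; auto.
Qed.

Definition tail_len n := proj1_sig (constructive_indefinite_description _ (tail_sup_approx n)).
Definition envelope n := run_max n (tail_len n).

Lemma envelope_spec n : tail_sup n - slack n < var (envelope n).
Proof. unfold envelope, tail_len; destruct (constructive_indefinite_description _ _); auto. Qed.

Fixpoint env_min n x :=
  match n with O => envelope 0 x | S n => Rmin (env_min n x) (envelope (S n) x) end.

Lemma env_min_cont n : rcont (env_min n).
Proof.
  induction n; intros x; simpl; [apply run_max_cont| apply rc_min; [apply IHn| apply run_max_cont]].
Qed.

Lemma env_min_le n x : env_min n x <= envelope n x.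
Proof. destruct n; simpl; [lra| apply Rmin_r]. Qed.

Lemma env_min_range n x : 0 <= env_min n x <= gbound.
Proof.
  induction n; simpl; [apply run_max_range|]. unfold Rmin. destruct (Rle_dec _ _); auto.
  apply run_max_range.
Qed.

Lemma env_min_bounded n : bounded_nonneg (env_min n).
Proof. exists gbound; split; [apply Rmax_l| apply env_min_range]. Qed.

Lemma env_min_antitone n n' x : (n <= n')%nat -> env_min n' x <= env_min n x.
Proof. induction 1; [lra|]. simpl. eapply Rle_trans; [apply Rmin_l| auto]. Qed.

Lemma env_max_le_tail n : var (fun x => Rmax (env_min n x) (envelope (S n) x)) <= tail_sup n.
Proof.
  set (m := Nat.max (tail_len n) (S (tail_len (S n)))).
  eapply Rle_trans; [|apply (tail_sup_ge n m)]. apply (variation_mono omega M hb).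
  - intros x; pose proof (env_min_range n x). eapply Rle_trans; [|apply Rmax_l]. lra.
  - apply run_max_bounded.
  - intros x. apply Rmax_lub.
    + eapply Rle_trans; [apply env_min_le|]. apply run_max_mono; unfold m; lia.
    + apply run_max_mono; unfold m; lia.
Qed.

Lemma env_min_variation n : var (envelope n) - total_slack n <= var (env_min n).
Proof.
  induction n; simpl total_slack.
  { replace (env_min 0) with (envelope 0) by reflexivity; lra. }
  pose proof (variation_min_max omega homega M hb (env_min n) (envelope (S n))
    (env_min_cont n) (run_max_cont _ _) (env_min_bounded n) (run_max_bounded _ _)) as hadd.
  pose proof (env_max_le_tail n). pose proof (envelope_spec n).
  change (fun x => Rmin (env_min n x) (envelope (S n) x)) with (env_min (S n)) in hadd.
  unfold var in *. lra.
Qed.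

Lemma env_min_big n : eps / 2 < var (env_min n).
Proof.
  pose proof (env_min_variation n). pose proof (envelope_spec n). pose proof (tail_sup_big n).
  pose proof (total_slack_lt (S n)) as hS. simpl in hS. lra.
Qed.

(* Dini: the v_n decrease to 0 pointwise and v_0 vanishes at infinity, so a
   finite subcover of {v_n < d} over a compact set gives uniform smallness. *)
Lemma env_min_small d : 0 < d -> exists N, forall x, env_min N x < d.
Proof.
  intros hd. destruct (run_max_vanishes 0 (tail_len 0) d hd) as [Q [cQ hQ]].
  assert (pw : forall x, exists n, env_min n x < d).
  { intros x. destruct (pointwise_null x d hd) as [N hN]. exists N.
    eapply Rle_lt_trans; [apply env_min_le|]. unfold envelope.
    destruct (run_max_attained N (tail_len N) x) as [k [hk ->]]. apply hN; lia. }
  destruct (cQ nat (fun n x => env_min n x < d)) as [l hl].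
  - intros n; apply open_lt; apply env_min_cont.
  - intros x _; apply pw.
  - exists (fold_right Nat.max 0%nat l). intros x. destruct (classic (Q x)) as [qx|nqx].
    + destruct (hl x qx) as [n [hn hv]].
      eapply Rle_lt_trans; [apply env_min_antitone, in_list_max; eauto| auto].
    + eapply Rle_lt_trans; [apply (env_min_antitone 0%nat); lia|]. simpl. apply hQ; auto.
Qed.

Lemma weak_null_contra : False.
Proof.
  destruct (env_min_small (eps / (4 * M))) as [N hN]; [apply Rdiv_lt_0_compat; lra|].
  pose proof (env_min_big N).
  assert (var (env_min N) <= M * (eps / (4 * M))).
  { apply (variation_le omega M hb);
      [intros; apply env_min_range| left; apply Rdiv_lt_0_compat; lra| intros; left; auto]. }
  replace (M * (eps / (4 * M))) with (eps / 4) in * by (field; lra). lra.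
Qed.

End WeakNull.

Lemma weak_null (X : TopSpace) (omega : (X -> C) -> C) (gs : nat -> X -> C) B eps :
  in_C0_dual omega -> (forall n, in_C0 (gs n)) -> (forall n x, Cnorm (gs n x) <= B) ->
  (forall x d, 0 < d -> exists N, forall k, (N <= k)%nat -> Cnorm (gs k x) < d) ->
  0 < eps -> (forall n, eps <= Cnorm (omega (gs n))) -> False.
Proof.
  intros homega gC hB pn he big. destruct (dual_bound omega homega) as [M [hM hb]].
  exact (weak_null_contra omega homega M hM hb gs gC B hB pn eps he big).
Qed.
Section Escape.
Context {G : TopGroup}.
Local Notation "a * b" := (gmul G a b).
Local Notation inv := (ginv G).

Lemma compact_difference_nbhd : locally_compact G ->
  exists V Q, open V /\ V (gone G) /\ tcompact Q /\ forall a b, V a -> V b -> Q (inv a * b).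
Proof.
  intros LG. destruct (LG (gone G)) as [W0 [Q [oW [We [WQ cQ]]]]].
  destruct (gmul_cont G W0 oW (inv (gone G)) (gone G)) as [A [B [oA [oB [Ae [Be HAB]]]]]].
  { rewrite ginv1, gmul1l; auto. }
  exists (fun a => A (inv a) /\ B a), Q. repeat split; auto.
  - apply open_inter; [apply (ginv_cont G A oA)| auto].
  - intros a b [ha _] [_ hb]. apply WQ, HAB; auto.
Qed.

(* Each s_n is
   chosen outside the compact set covered by the translates s_i Q, i < n. *)
Lemma separated_seq (P Q : G -> Prop) : tcompact Q ->
  (forall L, tcompact L -> exists s, ~ L s /\ P s) ->
  exists s : nat -> G, (forall n, P (s n)) /\
    forall i n, (i < n)%nat -> ~ Q (inv (s i) * s n).
Proof.
  intros cQ esc.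
  assert (Hn : forall l : list G, exists s, ~ (exists i, In i l /\ Q (inv i * s)) /\ P s).
  { intros l. apply esc. apply compact_funion. intros i _.
    apply (compact_image (fun z => i * z) Q); auto.
    - apply cont_lmul.
    - intros z hz. rewrite gmulA, gmulVl, gmul1l; auto.
    - intros y hy. exists (inv i * y); split; auto. rewrite gmulA, gmulVr, gmul1l; auto. }
  destruct (choice _ Hn) as [next Hnext].
  set (prefix := nat_rect (fun _ => list G) nil (fun n l => l ++ next l :: nil)).
  set (s := fun n => next (prefix n)).
  assert (Hin : forall i n, (i < n)%nat -> In (s i) (prefix n)).
  { intros i n; induction n; intros h; [lia|].
    change (prefix (S n)) with (prefix n ++ next (prefix n) :: nil). apply in_or_app.
    destruct (Nat.eq_dec i n) as [->|ne]; [right; left; auto| left; apply IHn; lia]. }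
  exists s; split; [intros n; apply (proj2 (Hnext (prefix n)))|].
  intros i n h hq. apply (proj1 (Hnext (prefix n))). exists (s i); split; auto.
Qed.

(* A separated sequence leaves every compact set: a translate c V contains
   at most one s_n, and finitely many translates cover the compact set. *)
Lemma separated_escapes (V Q : G -> Prop) (s : nat -> G) :
  open V -> V (gone G) -> (forall a b, V a -> V b -> Q (inv a * b)) ->
  (forall i n, (i < n)%nat -> ~ Q (inv (s i) * s n)) ->
  forall K, tcompact K -> exists N, forall n, (N <= n)%nat -> ~ K (s n).
Proof.
  intros oV Ve HV Hsep K cK.
  destruct (cK {c | K c} (fun c z => V (inv (proj1_sig c) * z))) as [l Hl].
  - intros c. apply (cont_lmul (inv (proj1_sig c)) V oV).
  - intros z Kz. exists (exist _ z Kz). simpl. rewrite gmulVl. auto.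
  - assert (Hc : forall c : {c | K c}, exists N, forall n, (N <= n)%nat ->
        ~ V (inv (proj1_sig c) * s n)).
    { intros c. destruct (classic (exists n0, V (inv (proj1_sig c) * s n0))) as [[n0 h0]|hn].
      - exists (S n0). intros n hn hv. apply (Hsep n0 n); [lia|].
        replace (inv (s n0) * s n) with
          (inv (inv (proj1_sig c) * s n0) * (inv (proj1_sig c) * s n)).
        + apply HV; auto.
        + rewrite ginv_mul, ginvK, <- gmulA, (gmulA G (proj1_sig c)), gmulVr, gmul1l; auto.
      - exists 0%nat. intros n _ hv. apply hn; eauto. }
    destruct (choice _ Hc) as [Nf HNf].
    exists (fold_right Nat.max 0%nat (map Nf l)). intros n hn Kn.
    destruct (Hl (s n) Kn) as [c [hc hv]]. apply (HNf c n); auto.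
    pose proof (in_list_max (map Nf l) (Nf c) (in_map Nf l c hc)). lia.
Qed.

Lemma escape_seq (P : G -> Prop) : locally_compact G ->
  (forall L, tcompact L -> exists s, ~ L s /\ P s) ->
  exists s : nat -> G, (forall n, P (s n)) /\
    forall K, tcompact K -> exists N, forall n, (N <= n)%nat -> ~ K (s n).
Proof.
  intros LG esc. destruct (compact_difference_nbhd LG) as [V [Q [oV [Ve [cQ HV]]]]].
  destruct (separated_seq P Q cQ esc) as [s [hP hsep]].
  exists s; split; auto. apply (separated_escapes V Q); auto.
Qed.

End Escape.

(* Continuity is
   [slice_cont]; if s |-> omega (alpha_s f) did not vanish at infinity, along
   an escaping sequence s_n the functions alpha_{s_n} f would be bounded,
   pointwise null (s_n^-1 . x leaves the compact preimage of the set where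
   |f| >= d) and of omega-value >= eps, contradicting the weak-null lemma. *)
Lemma slice_proper_of_orbit_proper (G : TopGroup) (X : TopSpace) (act : G -> X -> X) :
  locally_compact G -> continuous_action G X act ->
  (forall (x : X) (K : X -> Prop), tcompact K -> tcompact (fun s : G => K (act s x))) ->
  slice_proper G X act.
Proof.
  intros LG ca orb omega f homega hf. split; [apply slice_cont; auto|].
  intros eps he. apply NNPP; intros hno.
  assert (esc : forall L, tcompact L ->
      exists s, ~ L s /\ eps <= Cnorm (omega (alpha G X act s f))).
  { intros L cL. apply NNPP; intros h. apply hno. exists L; split; auto. intros s ns.
    apply Rnot_le_lt. intros hle. apply h. exists s; auto. }
  destruct (escape_seq _ LG esc) as [s [hs hfin]].
  destruct (in_C0_bounded f hf) as [B [_ hB]].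
  apply (weak_null X omega (fun n => alpha G X act (s n) f) B eps homega); auto.
  - intros n; apply (alpha_C0 ca); auto.
  - intros n x; apply hB.
  - intros x d hd. destruct (proj2 hf d hd) as [K [cK hK]].
    destruct (hfin (fun t => K (act (ginv G t) x))) as [N hN].
    + apply (compact_inv (fun t => K (act t x))), orb, cK.
    + exists N; intros k hk. apply hK. apply hN; auto.
Qed.

Theorem mainTheorem11 (G : TopGroup) (X : TopSpace) (act : G -> X -> X) :
  hausdorff G -> locally_compact G ->
  hausdorff X -> locally_compact X ->
  continuous_action G X act ->
  (slice_proper G X act <->
   forall (x : X) (K : X -> Prop), tcompact K ->
     tcompact (fun s : G => K (act s x))).
Proof.
  intros HG LG HX LX ca. split.
  - apply orbit_proper_of_slice_proper; auto.
  - apply slice_proper_of_orbit_proper; auto.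
Qed.
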